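(* Under (A2) (with $\theta_{k,N}=\theta_k$) or under (A3), for each $k$, with $\mathbf d_{1,N}=N^{-1}\mathbf a'(\theta_{k,N})$ and $\mathbf d_{2,N}=\mathbf a(\theta_{k,N})$, one has $$\liminf_{N\to\infty}\mathbf d_{1,N}^*\boldsymbol\Pi_N\mathbf d_{1,N}>0\quad\text{and}\quad\liminf_{N\to\infty}\gamma_N>0,$$ where $\gamma_N=\sum_{j,\ell=1}^M\vartheta_{j,\ell}|\mathbf u_{j,N}^*(\mathbf d_{1,N}\mathbf d_{2,N}^*+\mathbf d_{2,N}\mathbf d_{1,N}^* )\mathbf u_{\ell,N}|^2$. Moreover, under (A2), $\mathbf d_{1,N}^*\boldsymbol\Pi_N\mathbf d_{1,N}\to c^2/12$.
   Context: Array model: $c>0$, $\sigma^2>0$, integer $K\ge1$; $M=M(N)>K$ with $M/N\to c$. Steering vector $\mathbf a(\theta)=M^{-1/2}(1,e^{\mathrm i\theta},\dots,e^{\mathrm i(M-1)\theta})^T$, derivative $\mathbf a'(\theta)$. $\mathbf A_N=[\mathbf a(\theta_{1,N}),\dots,\mathbf a(\theta_{K,N})]$, $\mathbf S_N\in\mathbb C^{K\times N}$ deterministic, $\mathbf B_N=N^{-1/2}\mathbf A_N\mathbf S_N$. $\mathbf u_{1,N},\dots,\mathbf u_{K,N}$ orthonormal eigenvectors of $\mathbf B_N\mathbf B_N^*$ for its nonzero eigenvalues $\lambda_{1,N}\ge\dots\ge\lambda_{K,N}$, $\mathbf u_{K+1,N},\dots,\mathbf u_{M,N}$ orthonormal basis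 of its kernel, $\boldsymbol\Pi_N=\mathbf I-\sum_{k\le K}\mathbf u_{k,N}\mathbf u_{k,N}^*$. $\lambda_k=\lim\lambda_{k,N}$ (under (A3), $\lambda_1=1+|\mathrm{sinc}(\alpha c/2)|$, $\lambda_2=1-|\mathrm{sinc}(\alpha c/2)|$, $\mathrm{sinc}(x)=\sin x/x$, $\mathrm{sinc}(0)=1$). Weights: for $1\le j,\ell\le K$, $\vartheta_{j,\ell}=\frac{\sigma^4c(\lambda_j\lambda_\ell+(\lambda_j+\lambda_\ell)\sigma^2+\sigma^4)(\lambda_j\lambda_\ell+\sigma^4c)}{4(\lambda_j^2-\sigma^4c)(\lambda_\ell^2-\sigma^4c)(\lambda_j\lambda_\ell-\sigma^4c)}$; for $j\le K<\ell$, $\vartheta_{j,\ell}=\vartheta_{\ell,j}=\frac{\sigma^2(\lambda_j+\sigma^2)}{4(\lambda_j^2-\sigma^4c)}$; $\vartheta_{j,\ell}=0$ for $j,\ell\ge K+1$. Assumption (A2): $\theta_{k,N}=\theta_k$ fixed, pairwise distinct modulo $2\pi$, eigenvalues of $N^{-1}\mathbf S_N\mathbf S_N^*$ converge to $\lambda_1>\dots>\lambda_K>\sigma^2\sqrt c$. Assumption (A3): $K=2$, $N^{-1}\mathbf S_N\mathbf S_N^*\to\mathbf I_2$, $\theta_{1,N}$ deterministic, $\theta_{2,N}=\theta_{1,N}+\alpha/N$, $\alpha>0$, $|\mathrm{sinc}(\alpha c/2)|<1-\sigma^2\sqrt c$. *)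

From Stdlib Require Import Reals ZArith Arith.
Open Scope R_scope.

Record Cx := mkC { Re : R; Im : R }.
Definition C0 : Cx := mkC 0 0.
Definition C1 : Cx := mkC 1 0.
Definition Cadd (z w : Cx) : Cx := mkC (Re z + Re w) (Im z + Im w).
Definition Copp (z : Cx) : Cx := mkC (- Re z) (- Im z).
Definition Cmul (z w : Cx) : Cx :=
  mkC (Re z * Re w - Im z * Im w) (Re z * Im w + Im z * Re w).
Definition Cconj (z : Cx) : Cx := mkC (Re z) (- Im z).
Definition Cscale (r : R) (z : Cx) : Cx := mkC (r * Re z) (r * Im z).
Definition Cexpi (t : R) : Cx := mkC (cos t) (sin t).
Definition Cabs2 (z : Cx) : R := Re z ^ 2 + Im z ^ 2.
Definition Cconv (x : nat -> Cx) (z : Cx) : Prop :=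
  Un_cv (fun N => Re (x N)) (Re z) /\ Un_cv (fun N => Im (x N)) (Im z).

Fixpoint Csum (n : nat) (f : nat -> Cx) : Cx :=
  match n with O => C0 | S m => Cadd (Csum m f) (f m) end.
Fixpoint rsum (n : nat) (f : nat -> R) : R :=
  match n with O => 0 | S m => rsum m f + f m end.

Definition cinner (n : nat) (x y : nat -> Cx) : Cx :=
  Csum n (fun i => Cmul (Cconj (x i)) (y i)).
Definition matvec (n : nat) (A : nat -> nat -> Cx) (x : nat -> Cx) : nat -> Cx :=
  fun i => Csum n (fun l => Cmul (A i l) (x l)).
Definition qform (n : nat) (A : nat -> nat -> Cx) (x y : nat -> Cx) : Cx :=
  Csum n (fun i => Csum n (fun j => Cmul (Cconj (x i)) (Cmul (A i j) (y j)))).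
Definition orthonormal (n m : nat) (v : nat -> nat -> Cx) : Prop :=
  forall j l, (j < m)%nat -> (l < m)%nat ->
    cinner n (v j) (v l) = if Nat.eqb j l then C1 else C0.
Definition is_eigvec (n : nat) (A : nat -> nat -> Cx) (mu : R) (x : nat -> Cx) : Prop :=
  forall i, (i < n)%nat -> matvec n A x i = Cscale mu (x i).

(** steering vector a(theta) in Cx^M : entries M^{-1/2} e^{i m theta}, m = 0..M-1 *)
Definition steer (M : nat) (th : R) : nat -> Cx :=
  fun m => Cscale (/ sqrt (INR M)) (Cexpi (INR m * th)).
(** its derivative a'(theta) : entries M^{-1/2} (i m) e^{i m theta} *)
Definition steer' (M : nat) (th : R) : nat -> Cx :=
  fun m => Cscale (/ sqrt (INR M)) (Cmul (mkC 0 (INR m)) (Cexpi (INR m * th))).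
(** B_N = N^{-1/2} A_N S_N  (M x N), th k = theta_{k+1,N}, S : K x N *)
Definition Bmat (M N K : nat) (th : nat -> R) (S : nat -> nat -> Cx) : nat -> nat -> Cx :=
  fun i j => Cscale (/ sqrt (INR N)) (Csum K (fun k => Cmul (steer M (th k) i) (S k j))).
Definition BBs (M N K : nat) (th : nat -> R) (S : nat -> nat -> Cx) : nat -> nat -> Cx :=
  fun i j => Csum N (fun l => Cmul (Bmat M N K th S i l) (Cconj (Bmat M N K th S j l))).
Definition Gram (N K : nat) (S : nat -> nat -> Cx) : nat -> nat -> Cx :=
  fun i j => Cscale (/ INR N) (Csum N (fun l => Cmul (S i l) (Cconj (S j l)))).
Definition PiMat (K : nat) (u : nat -> nat -> Cx) : nat -> nat -> Cx :=
  fun i j => Cadd (if Nat.eqb i j then C1 else C0)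
                  (Copp (Csum K (fun k => Cmul (u k i) (Cconj (u k j))))).
Definition Dmat (d1 d2 : nat -> Cx) : nat -> nat -> Cx :=
  fun i j => Cadd (Cmul (d1 i) (Cconj (d2 j))) (Cmul (d2 i) (Cconj (d1 j))).

Definition sinc (x : R) : R := if Req_EM_T x 0 then 1 else sin x / x.

(** weights vartheta_{j,l}, 0-based: index j < K corresponds to the paper's j+1 <= K.
    s2 stands for sigma^2 (so sigma^4 = s2^2). *)
Definition vtheta (c s2 : R) (K : nat) (lam : nat -> R) (j l : nat) : R :=
  match Nat.ltb j K, Nat.ltb l K with
  | true, true =>
      s2 ^ 2 * c * (lam j * lam l + (lam j + lam l) * s2 + s2 ^ 2)
        * (lam j * lam l + s2 ^ 2 * c)
      / (4 * (lam j ^ 2 - s2 ^ 2 * c) * (lam l ^ 2 - s2 ^ 2 * c)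
           * (lam j * lam l - s2 ^ 2 * c))
  | true, false => s2 * (lam j + s2) / (4 * (lam j ^ 2 - s2 ^ 2 * c))
  | false, true => s2 * (lam l + s2) / (4 * (lam l ^ 2 - s2 ^ 2 * c))
  | false, false => 0
  end.

Definition gammaN (M K : nat) (c s2 : R) (lam : nat -> R) (u : nat -> nat -> Cx)
    (d1 d2 : nat -> Cx) : R :=
  rsum M (fun j => rsum M (fun l =>
    vtheta c s2 K lam j l * Cabs2 (qform M (Dmat d1 d2) (u j) (u l)))).

(** liminf_{N -> oo} x_N > 0 *)
Definition liminf_pos (x : nat -> R) : Prop :=
  exists eps, 0 < eps /\ exists N0, forall N, (N0 <= N)%nat -> eps <= x N.

(** Assumption (A2), with limits lam 0 > ... > lam (K-1) of the eigenvalues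
    of N^{-1} S_N S_N^* (listed with multiplicity via an orthonormal eigenbasis). *)
Definition A2 (c s2 : R) (K : nat) (th : nat -> nat -> R)
    (S : nat -> nat -> nat -> Cx) (lam : nat -> R) : Prop :=
  (exists th0 : nat -> R,
      (forall N k, th N k = th0 k) /\
      (forall k l, (k < K)%nat -> (l < K)%nat -> k <> l ->
         forall z : Z, th0 k - th0 l <> 2 * PI * IZR z)) /\
  (exists (mu : nat -> nat -> R) (v : nat -> nat -> nat -> Cx),
      (forall N, orthonormal K K (v N) /\
         forall k, (k < K)%nat -> is_eigvec K (Gram N K (S N)) (mu k N) (v N k)) /\
      (forall k, (k < K)%nat -> Un_cv (mu k) (lam k))) /\
  (forall k, (k + 1 < K)%nat -> lam (k + 1)%nat < lam k) /\
  s2 * sqrt c < lam (K - 1)%nat.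

Definition A3 (c s2 : R) (K : nat) (th : nat -> nat -> R)
    (S : nat -> nat -> nat -> Cx) (alpha : R) : Prop :=
  K = 2%nat /\
  (forall i j, (i < 2)%nat -> (j < 2)%nat ->
     Cconv (fun N => Gram N K (S N) i j) (if Nat.eqb i j then C1 else C0)) /\
  (forall N, (1 <= N)%nat -> th N 1%nat = th N 0%nat + alpha / INR N) /\
  0 < alpha /\
  Rabs (sinc (alpha * c / 2)) < 1 - s2 * sqrt c.

(** limiting eigenvalues under (A3) (0-based) *)
Definition lamA3 (c alpha : R) (k : nat) : R :=
  if Nat.eqb k 0 then 1 + Rabs (sinc (alpha * c / 2)) else 1 - Rabs (sinc (alpha * c / 2)).

(* Pi_N projects onto the span of the eigenvectors u_j, j >= K, which is exactly the orthogonal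
   complement of the steering vectors a(theta_l).  Thus d^* Pi d = |d|^2 - |P d|^2 with P the
   projection onto their span, and |P d|^2 lies between |a(theta_k)^* d|^2 and |A^* d|^2 / (1 - rho),
   rho measuring how far the a(theta_l) are from orthonormal.  Under (A2), rho -> 0,
   a(theta_l)^* d1 -> 0 for l <> k, |d1|^2 -> c^2/3 and |a(theta_k)^* d1|^2 -> c^2/4, whence the
   limit c^2/12.  Under (A3) the two steering vectors stay correlated, |a_1^* a_2| ->
     |sinc(alpha c/2)|
   < 1, and d1^* Pi d1 is bounded below with a test vector orthogonal to both of them, obtained
   by filtering a phase window with shift about N / q.  Finally gamma_N dominates a positive
   multiple of d1^* Pi d1, because the weights vartheta_{j,l} with j < K <= l are bounded below. *)

From Pilot Require Import Defs.
From Stdlib Require Import Reals ZArith Arith Lra Lia Psatz.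
From mathcomp Require all_boot all_algebra Rstruct complex.
(* Re-imported so that [C1] and [Re] of Defs shadow their namesakes from Reals. *)
Import Defs.
Open Scope R_scope.

Lemma Cx_eq (z w : Cx) : Re z = Re w -> Im z = Im w -> z = w.
Proof. destruct z, w; simpl; intros; subst; reflexivity. Qed.
Ltac ring_Cx := apply Cx_eq; simpl; ring.

Definition kron (i j : nat) : Cx := if Nat.eqb i j then C1 else C0.
Definition sqnorm (n : nat) (x : nat -> Cx) : R := rsum n (fun i => Cabs2 (x i)).

Lemma Csum_Re n f : Re (Csum n f) = rsum n (fun i => Re (f i)).
Proof. induction n; simpl; [reflexivity| rewrite IHn; reflexivity]. Qed.
Lemma Csum_Im n f : Im (Csum n f) = rsum n (fun i => Im (f i)).
Proof. induction n; simpl; [reflexivity| rewrite IHn; reflexivity]. Qed.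
Lemma Csum_ext n f g : (forall i, (i < n)%nat -> f i = g i) -> Csum n f = Csum n g.
Proof. induction n; intros H; simpl; [reflexivity|]. rewrite IHn, H; auto. Qed.
Lemma rsum_ext n f g : (forall i, (i < n)%nat -> f i = g i) -> rsum n f = rsum n g.
Proof. induction n; intros H; simpl; [reflexivity|]. rewrite IHn, H; auto. Qed.
Lemma Csum_add n f g : Csum n (fun i => Cadd (f i) (g i)) = Cadd (Csum n f) (Csum n g).
Proof. induction n; simpl. ring_Cx. rewrite IHn. ring_Cx. Qed.
Lemma Csum_mul_l n c f : Csum n (fun i => Cmul c (f i)) = Cmul c (Csum n f).
Proof. induction n; simpl. ring_Cx. rewrite IHn. ring_Cx. Qed.
Lemma Csum_mul_r n c f : Csum n (fun i => Cmul (f i) c) = Cmul (Csum n f) c.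
Proof. induction n; simpl. ring_Cx. rewrite IHn. ring_Cx. Qed.
Lemma Csum_scale n r f : Csum n (fun i => Cscale r (f i)) = Cscale r (Csum n f).
Proof. induction n; simpl. ring_Cx. rewrite IHn. ring_Cx. Qed.
Lemma Csum_conj n f : Cconj (Csum n f) = Csum n (fun i => Cconj (f i)).
Proof. induction n; simpl. ring_Cx. rewrite <- IHn. ring_Cx. Qed.
Lemma Csum_opp n f : Csum n (fun i => Copp (f i)) = Copp (Csum n f).
Proof. induction n; simpl. ring_Cx. rewrite IHn. ring_Cx. Qed.
Lemma Csum_swap n m f :
  Csum n (fun i => Csum m (fun j => f i j)) = Csum m (fun j => Csum n (fun i => f i j)).
Proof.
  induction n; simpl.
  - induction m; simpl; [reflexivity|]. rewrite <- IHm. ring_Cx.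
  - rewrite IHn, <- Csum_add. reflexivity.
Qed.
Lemma Csum_zero n f : (forall i, (i < n)%nat -> f i = C0) -> Csum n f = C0.
Proof. induction n; intros H; simpl; [reflexivity|]. rewrite IHn, H; auto. ring_Cx. Qed.
Lemma Csum_kron_r n f k : (k < n)%nat ->
  Csum n (fun i => Cmul (f i) (kron i k)) = f k.
Proof.
  induction n; intros Hk; [lia|]. simpl.
  destruct (Nat.eq_dec k n) as [->|Hne].
  - rewrite Csum_zero. unfold kron; rewrite Nat.eqb_refl. ring_Cx.
    intros i Hi. unfold kron. replace (i =? n)%nat with false by (symmetry; apply Nat.eqb_neq; lia).
    ring_Cx.
  - rewrite IHn by lia. unfold kron.
    replace (n =? k)%nat with false by (symmetry; apply Nat.eqb_neq; lia). ring_Cx.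
Qed.
Lemma Csum_kron_l n f k : (k < n)%nat ->
  Csum n (fun i => Cmul (kron k i) (f i)) = f k.
Proof.
  intros Hk. rewrite <- (Csum_kron_r n f k Hk). apply Csum_ext. intros i _.
  unfold kron. rewrite Nat.eqb_sym. destruct (i =? k)%nat; ring_Cx.
Qed.

Lemma rsum_add n f g : rsum n (fun i => f i + g i) = rsum n f + rsum n g.
Proof. induction n; simpl; [ring|]. rewrite IHn; ring. Qed.
Lemma rsum_scal n r f : rsum n (fun i => r * f i) = r * rsum n f.
Proof. induction n; simpl; [ring|]. rewrite IHn; ring. Qed.
Lemma rsum_opp n f : rsum n (fun i => - f i) = - rsum n f.
Proof. induction n; simpl; [ring|]. rewrite IHn; ring. Qed.
Lemma rsum_le n f g : (forall i, (i < n)%nat -> f i <= g i) -> rsum n f <= rsum n g.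
Proof.
  induction n; intros H; simpl; [lra|]. pose proof (H n ltac:(lia)).
  pose proof (IHn ltac:(intros; apply H; lia)). lra.
Qed.
Lemma rsum_nonneg n f : (forall i, (i < n)%nat -> 0 <= f i) -> 0 <= rsum n f.
Proof.
  intros H. replace 0 with (rsum n (fun _ => 0)); [apply rsum_le; auto|].
  clear H; induction n; simpl; [reflexivity | rewrite IHn; ring].
Qed.
Lemma rsum_zero n f : (forall i, (i < n)%nat -> f i = 0) -> rsum n f = 0.
Proof. induction n; intros H; simpl; [reflexivity|]. rewrite IHn, H; auto; try ring. Qed.
Lemma rsum_swap n m f :
  rsum n (fun i => rsum m (fun j => f i j)) = rsum m (fun j => rsum n (fun i => f i j)).
Proof.
  induction n; simpl.
  - rewrite rsum_zero; auto.
  - rewrite IHn, <- rsum_add. reflexivity.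
Qed.
Lemma rsum_term_le n f k : (forall i, (i < n)%nat -> 0 <= f i) -> (k < n)%nat -> f k <= rsum n f.
Proof.
  induction n; intros H Hk; [lia|]. simpl.
  destruct (Nat.eq_dec k n) as [->|Hne].
  - pose proof (rsum_nonneg n f ltac:(intros; apply H; lia)). lra.
  - pose proof (IHn ltac:(intros; apply H; lia) ltac:(lia)). pose proof (H n ltac:(lia)). lra.
Qed.
Lemma rsum_const n r : rsum n (fun _ => r) = INR n * r.
Proof. induction n; simpl rsum; [simpl; ring|]. rewrite IHn, S_INR. ring. Qed.

Lemma rsum_if_eqb K k v : (k < K)%nat -> rsum K (fun l => if Nat.eqb l k then v else 0) = v.
Proof.
  induction K; intros Hk; [lia|]. change (rsum (S K) ?f) with (rsum K f + f K).
  destruct (Nat.eq_dec k K) as [->|Hne].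
  - rewrite Nat.eqb_refl. rewrite rsum_zero. ring. intros i Hi.
    destruct (Nat.eqb_spec i K); [lia|reflexivity].
  - rewrite IHK by lia. destruct (Nat.eqb_spec K k); [lia|ring].
Qed.

Lemma Cabs2_nonneg z : 0 <= Cabs2 z.
Proof. unfold Cabs2. nra. Qed.
Lemma Cabs2_mul z w : Cabs2 (Cmul z w) = Cabs2 z * Cabs2 w.
Proof. unfold Cabs2; simpl. ring. Qed.
Lemma Cabs2_conj z : Cabs2 (Cconj z) = Cabs2 z.
Proof. unfold Cabs2; simpl. ring. Qed.
Lemma Cabs2_scale r z : Cabs2 (Cscale r z) = r ^ 2 * Cabs2 z.
Proof. unfold Cabs2; simpl. ring. Qed.
Lemma Cabs2_opp z : Cabs2 (Copp z) = Cabs2 z.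
Proof. unfold Cabs2; simpl. ring. Qed.
Lemma Cabs2_expi t : Cabs2 (Cexpi t) = 1.
Proof. unfold Cabs2; simpl. pose proof (sin2_cos2 t) as H. unfold Rsqr in H. nra. Qed.
Lemma Cabs2_scale_I r z : Cabs2 (Cscale r (Cmul (mkC 0 1) z)) = r ^ 2 * Cabs2 z.
Proof. unfold Cabs2; simpl. ring. Qed.
Lemma Cabs2_add_le z w : Cabs2 (Cadd z w) <= 2 * Cabs2 z + 2 * Cabs2 w.
Proof.
  destruct z as [a b], w as [c d]; unfold Cabs2; simpl.
  pose proof (pow2_ge_0 (a-c)); pose proof (pow2_ge_0 (b-d)). nra.
Qed.
Lemma Cmul_conj_self z : Cmul (Cconj z) z = mkC (Cabs2 z) 0.
Proof. unfold Cabs2. ring_Cx. Qed.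
Lemma sqnorm_nonneg n x : 0 <= sqnorm n x.
Proof. apply rsum_nonneg; intros; apply Cabs2_nonneg. Qed.
Lemma cinner_self n x : cinner n x x = mkC (sqnorm n x) 0.
Proof.
  unfold cinner, sqnorm. apply Cx_eq.
  - rewrite Csum_Re. apply rsum_ext. intros. rewrite Cmul_conj_self. reflexivity.
  - rewrite Csum_Im. simpl. rewrite rsum_zero; auto. intros. simpl. ring.
Qed.
Lemma Re_le_abs z : Re z ^ 2 <= Cabs2 z.
Proof. unfold Cabs2. nra. Qed.

Lemma le_of_pow2_le (p q : R) : 0 <= q -> p ^ 2 <= q ^ 2 -> p <= q.
Proof. intros. nra. Qed.

Lemma div_le_cross a b c d : 0 < b -> 0 < d -> a * d <= c * b -> a / b <= c / d.
Proof.
  intros Hb Hd H.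
  replace (a / b) with (a * d * / (b * d)) by (field; lra).
  replace (c / d) with (c * b * / (b * d)) by (field; lra).
  apply Rmult_le_compat_r; auto. left. apply Rinv_0_lt_compat. nra.
Qed.

Lemma Rabs_le_inv x b : Rabs x <= b -> - b <= x <= b.
Proof. intros H. unfold Rabs in H. destruct (Rcase_abs x); lra. Qed.

Lemma Cauchy_Schwarz n x y : Cabs2 (cinner n x y) <= sqnorm n x * sqnorm n y.
Proof.
  unfold cinner, sqnorm. induction n; simpl.
  - unfold Cabs2; simpl. lra.
  - set (S := Csum n (fun i => Cmul (Cconj (x i)) (y i))) in *.
    set (X := rsum n (fun i => Cabs2 (x i))) in *. set (Y := rsum n (fun i => Cabs2 (y i))) in *.
    assert (HX : 0 <= X) by (apply rsum_nonneg; intros; apply Cabs2_nonneg).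
    assert (HY : 0 <= Y) by (apply rsum_nonneg; intros; apply Cabs2_nonneg).
    set (a := x n) in *. set (b := y n) in *.
    destruct S as [s1 s2]. destruct a as [a1 a2]. destruct b as [b1 b2].
    unfold Cabs2 in *; simpl in *.
    set (t1 := a1 * b1 - - a2 * b2). set (t2 := a1 * b2 + - a2 * b1).
    assert (Ht : t1 ^ 2 + t2 ^ 2 = (a1^2+a2^2)*(b1^2+b2^2)) by (unfold t1, t2; ring).
    assert (Hk : 2 * (s1 * t1 + s2 * t2) <= X * (b1^2+b2^2) + Y * (a1^2+a2^2)).
    { apply le_of_pow2_le. nra.
      assert ((s1*t1+s2*t2)^2 <= (s1^2+s2^2)*(t1^2+t2^2)).
      { pose proof (pow2_ge_0 (s1*t2 - s2*t1)). nra. }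
      assert ((s1^2+s2^2)*(t1^2+t2^2) <= X*Y*((a1^2+a2^2)*(b1^2+b2^2))).
      { rewrite Ht. apply Rmult_le_compat_r; nra. }
      pose proof (pow2_ge_0 (X * (b1^2+b2^2) - Y * (a1^2+a2^2))). nra. }
    fold t1 t2. nra.
Qed.

(* Square matrices: U^* U = I forces U U^* = I, which is mathcomp's [mulmx1C]. *)
Module OrthonormalCompleteness.
Import all_boot all_algebra Rstruct complex.
Import GRing.Theory Num.Theory.
Local Open Scope ring_scope.
Definition toC (z : Cx) : R[i] := Complex (Defs.Re z) (Defs.Im z).
Lemma toC_inj z w : toC z = toC w -> z = w.
Proof. case: z; case: w => ? ? ? ? [-> ->]. by []. Qed.
Lemma toC_sum n f : toC (Csum n f) = \sum_(j < n) toC (f j).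
Proof. elim: n => [|n IH]; first by rewrite big_ord0. by rewrite big_ord_recr /= -IH. Qed.

Lemma orthonormal_complete_mx (n : nat) (u : nat -> nat -> Cx) :
  (forall j l, (j < n)%coq_nat -> (l < n)%coq_nat ->
     Csum n (fun i => Cmul (Cconj (u j i)) (u l i)) = if Nat.eqb j l then Defs.C1 else Defs.C0) ->
  forall i i', (i < n)%coq_nat -> (i' < n)%coq_nat ->
     Csum n (fun j => Cmul (u j i) (Cconj (u j i'))) = if Nat.eqb i i' then Defs.C1 else Defs.C0.
Proof.
move=> Hon i i' /ltP Hi /ltP Hi'.
pose U : 'M[R[i]]_n := \matrix_(a < n, b < n) toC (u b a).
pose V : 'M[R[i]]_n := \matrix_(a < n, b < n) (toC (u a b))^*.
have HVU : V *m U = 1%:M.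
  apply/matrixP => j l; rewrite !mxE.
  have E := Hon j l (ltP (ltn_ord j)) (ltP (ltn_ord l)).
  have E' := congr1 toC E; rewrite toC_sum in E'.
  rewrite (eq_bigr (fun k : 'I_n => toC (Cmul (Cconj (u j k)) (u l k)))); last first.
    by move=> k _; rewrite !mxE.
  rewrite E'.
  case: (Nat.eqb_spec j l) => [/val_inj -> | Hne]; first by rewrite eqxx.
  have -> : (j == l) = false by apply/negbTE/eqP => E3; apply: Hne; rewrite E3.
  by [].
have HUV := mulmx1C HVU.
apply: toC_inj. rewrite toC_sum.
move/matrixP: HUV => /(_ (Ordinal Hi) (Ordinal Hi')).
rewrite !mxE => E.
rewrite (eq_bigr (fun k : 'I_n => U (Ordinal Hi) k * V k (Ordinal Hi'))); last first.
  by move=> k _; rewrite !mxE.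
rewrite E.
case: (Nat.eqb_spec i i') => [E2 | Hne].
  subst i'. by rewrite (_ : Ordinal Hi = Ordinal Hi') ?eqxx //; apply: val_inj.
have -> : (Ordinal Hi == Ordinal Hi') = false.
  by apply/negbTE/eqP => E3; apply: Hne; move: (congr1 val E3).
by [].
Qed.
End OrthonormalCompleteness.

Lemma orthonormal_complete n u : orthonormal n n u ->
  forall i i', (i < n)%nat -> (i' < n)%nat ->
  Csum n (fun j => Cmul (u j i) (Cconj (u j i'))) = kron i i'.
Proof. intros H. apply OrthonormalCompleteness.orthonormal_complete_mx. intros. apply H; auto. Qed.

Lemma Csum_prod n m f g :
  Cmul (Csum n f) (Csum m g) = Csum n (fun i => Csum m (fun j => Cmul (f i) (g j))).
Proof.
  rewrite <- Csum_mul_r. apply Csum_ext. intros i _. rewrite <- Csum_mul_l. reflexivity.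
Qed.

Lemma cinner_parseval n u (Hon : orthonormal n n u) x y :
  cinner n x y = Csum n (fun j => Cmul (Cconj (cinner n (u j) x)) (cinner n (u j) y)).
Proof.
  unfold cinner.
  transitivity (Csum n (fun i => Csum n (fun i' =>
     Cmul (Cmul (Cconj (x i)) (y i')) (Csum n (fun j => Cmul (u j i) (Cconj (u j i'))))))).
  - apply Csum_ext. intros i Hi.
    rewrite (Csum_ext n _ (fun i' => Cmul (Cmul (Cconj (x i)) (y i')) (kron i i'))).
    + rewrite <- (Csum_kron_r n (fun i' => Cmul (Cconj (x i)) (y i')) i Hi).
      apply Csum_ext. intros i' _. unfold kron. rewrite Nat.eqb_sym. reflexivity.
    + intros i' Hi'. rewrite orthonormal_complete; auto.
  - symmetry.
    rewrite (Csum_ext n _ (fun j => Csum n (fun i => Csum n (fun i' =>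
       Cmul (Cmul (Cconj (x i)) (y i')) (Cmul (u j i) (Cconj (u j i'))))))).
    + rewrite Csum_swap. apply Csum_ext. intros i _.
      rewrite Csum_swap. apply Csum_ext. intros i' _.
      rewrite Csum_mul_l. reflexivity.
    + intros j _. rewrite Csum_conj, Csum_prod. apply Csum_ext. intros i _.
      apply Csum_ext. intros i' _. ring_Cx.
Qed.

Lemma sqnorm_parseval n u (Hon : orthonormal n n u) x :
  sqnorm n x = rsum n (fun j => Cabs2 (cinner n (u j) x)).
Proof.
  assert (H := cinner_parseval n u Hon x x). rewrite cinner_self in H.
  apply (f_equal Re) in H. cbn [Re] in H. rewrite H, Csum_Re.
  apply rsum_ext. intros. rewrite Cmul_conj_self. reflexivity.
Qed.

Definition synthesis (K : nat) (a : nat -> nat -> Cx) (c : nat -> Cx) : nat -> Cx :=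
  fun i => Csum K (fun k => Cmul (a k i) (c k)).
Definition analysis (n : nat) (a : nat -> nat -> Cx) (x : nat -> Cx) : nat -> Cx :=
  fun k => cinner n (a k) x.
Definition frame_gram (n : nat) (a : nat -> nat -> Cx) : nat -> nat -> Cx :=
  fun k l => cinner n (a k) (a l).

Lemma cinner_synthesis n K a c x :
  cinner n (synthesis K a c) x = cinner K c (analysis n a x).
Proof.
  unfold cinner, synthesis, analysis.
  rewrite (Csum_ext n _ (fun i => Csum K (fun k => Cmul (Cconj (c k)) (Cmul (Cconj (a k i)) (x i))))).
  - rewrite Csum_swap. apply Csum_ext. intros k _. unfold cinner. rewrite Csum_mul_l. reflexivity.
  - intros i _. rewrite Csum_conj, <- Csum_mul_r. apply Csum_ext. intros k _. ring_Cx.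
Qed.

Lemma analysis_synthesis n K a c : forall k,
  analysis n a (synthesis K a c) k = matvec K (frame_gram n a) c k.
Proof.
  intros k. unfold analysis, synthesis, matvec, frame_gram, cinner.
  rewrite (Csum_ext n _ (fun i => Csum K (fun l => Cmul (Cconj (a k i)) (Cmul (a l i) (c l))))).
  - rewrite Csum_swap. apply Csum_ext. intros l _. rewrite <- Csum_mul_r. apply Csum_ext. intros.
    ring_Cx.
  - intros i _. rewrite Csum_mul_l. reflexivity.
Qed.

Lemma cinner_ext n x y x' y' : (forall i, (i < n)%nat -> x i = x' i) ->
  (forall i, (i < n)%nat -> y i = y' i) -> cinner n x y = cinner n x' y'.
Proof. intros H1 H2. unfold cinner. apply Csum_ext. intros. rewrite H1, H2; auto. Qed.

Lemma sqnorm_synthesis n K a c :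
  sqnorm n (synthesis K a c) = Re (cinner K c (matvec K (frame_gram n a) c)).
Proof.
  assert (H := cinner_synthesis n K a c (synthesis K a c)). rewrite cinner_self in H.
  apply (f_equal Re) in H. cbn [Re] in H. rewrite H. f_equal.
  apply cinner_ext; auto. intros. apply analysis_synthesis.
Qed.

Lemma Rabs_rsum_le n f g : (forall i, (i < n)%nat -> Rabs (f i) <= g i) ->
  Rabs (rsum n f) <= rsum n g.
Proof.
  induction n; intros H; simpl. rewrite Rabs_R0; lra.
  eapply Rle_trans. apply Rabs_triang. pose proof (H n ltac:(lia)).
  pose proof (IHn ltac:(intros; apply H; lia)). lra.
Qed.

Lemma Re_perturb_le x e y eps : 0 <= eps -> Cabs2 e <= eps ^ 2 ->
  Rabs (Re (Cmul (Cconj x) (Cmul e y))) <= eps * (Cabs2 x + Cabs2 y) / 2.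
Proof.
  intros He Hb. apply le_of_pow2_le.
  - pose proof (Cabs2_nonneg x); pose proof (Cabs2_nonneg y). apply Rmult_le_pos; [|lra]. nra.
  - rewrite pow2_abs.
    eapply Rle_trans. apply Re_le_abs.
    rewrite !Cabs2_mul, Cabs2_conj.
    pose proof (Cabs2_nonneg x); pose proof (Cabs2_nonneg y); pose proof (Cabs2_nonneg e).
    set (X := Cabs2 x) in *. set (Y := Cabs2 y) in *.
    assert (X * (Cabs2 e * Y) <= X * (eps^2 * Y)) by (apply Rmult_le_compat_l; nra).
    pose proof (pow2_ge_0 (X - Y)). nra.
Qed.

Lemma cinner_matvec_near_id n H eps w :
  (forall i j, (i < n)%nat -> (j < n)%nat -> 0 <= eps i j /\
      Cabs2 (Cadd (H i j) (Copp (kron i j))) <= eps i j ^ 2) ->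
  Rabs (Re (cinner n w (matvec n H w)) - sqnorm n w) <=
    rsum n (fun i => rsum n (fun j => eps i j * (Cabs2 (w i) + Cabs2 (w j)) / 2)).
Proof.
  intros Hb.
  assert (E : Re (cinner n w (matvec n H w)) - sqnorm n w =
     rsum n (fun i => rsum n (fun j => Re (Cmul (Cconj (w i)) (Cmul (Cadd (H i j) (Copp (kron i j))) (w j)))))).
  { unfold cinner, matvec, sqnorm. rewrite Csum_Re.
    unfold Rminus. rewrite <- rsum_opp, <- rsum_add. apply rsum_ext. intros i Hi.
    rewrite <- Csum_mul_l, Csum_Re.
    rewrite (rsum_ext n (fun j => Re (Cmul (Cconj (w i)) (Cmul (Cadd (H i j) (Copp (kron i j))) (w j))))
       (fun j => Re (Cmul (Cconj (w i)) (Cmul (H i j) (w j))) + - Re (Cmul (Cconj (w i)) (Cmul (kron i j) (w j))))).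
    - rewrite rsum_add, rsum_opp. f_equal. f_equal.
      rewrite <- Csum_Re. rewrite Csum_mul_l. rewrite Csum_kron_l by auto.
      rewrite Cmul_conj_self. reflexivity.
    - intros j _. simpl. ring. }
  rewrite E. apply Rabs_rsum_le. intros i Hi. apply Rabs_rsum_le. intros j Hj.
  destruct (Hb i j Hi Hj). apply Re_perturb_le; auto.
Qed.

Definition adjB (n Nn K : nat) (th : nat -> R) (S : nat -> nat -> Cx) (x : nat -> Cx) : nat -> Cx :=
  fun l => Csum n (fun i => Cmul (Cconj (Bmat n Nn K th S i l)) (x i)).
Definition steers (n : nat) (th : nat -> R) : nat -> nat -> Cx := fun k => steer n (th k).

Lemma Cabs2_zero z : Cabs2 z = 0 -> z = C0.
Proof. destruct z as [a b]; unfold Cabs2; simpl; intros H. apply Cx_eq; simpl; nra. Qed.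

Lemma rsum_nonneg_zero n f : (forall i, (i < n)%nat -> 0 <= f i) -> rsum n f = 0 ->
  forall i, (i < n)%nat -> f i = 0.
Proof.
  intros H0 Hs i Hi. pose proof (rsum_term_le n f i H0 Hi). pose proof (H0 i Hi). lra.
Qed.

Lemma sqnorm_zero n x : sqnorm n x = 0 -> forall i, (i < n)%nat -> x i = C0.
Proof.
  intros H i Hi. apply Cabs2_zero. apply (rsum_nonneg_zero n (fun i => Cabs2 (x i))); auto.
  intros; apply Cabs2_nonneg.
Qed.

Lemma cinner_BBs n Nn K th S x :
  cinner n x (matvec n (BBs n Nn K th S) x) =
  Csum Nn (fun l => Cmul (Cconj (adjB n Nn K th S x l)) (adjB n Nn K th S x l)).
Proof.
  set (B := Bmat n Nn K th S).
  unfold cinner, matvec, BBs, adjB. fold B.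
  transitivity (Csum n (fun i => Csum Nn (fun l => Csum n (fun i' =>
       Cmul (Cmul (B i l) (Cconj (x i))) (Cmul (Cconj (B i' l)) (x i')))))).
  - apply Csum_ext; intros i _. rewrite <- Csum_mul_l.
    rewrite (Csum_ext n _ (fun i' => Csum Nn (fun l => Cmul (Cmul (B i l) (Cconj (x i))) (Cmul (Cconj (B i' l)) (x i'))))).
    + apply Csum_swap.
    + intros i' _. rewrite <- Csum_mul_r, <- Csum_mul_l. apply Csum_ext; intros. ring_Cx.
  - rewrite Csum_swap. apply Csum_ext; intros l _.
    rewrite Csum_conj, Csum_prod. apply Csum_ext; intros i _. apply Csum_ext; intros i' _. ring_Cx.
Qed.

Lemma Re_cinner_BBs n Nn K th S x :
  Re (cinner n x (matvec n (BBs n Nn K th S) x)) = sqnorm Nn (adjB n Nn K th S x).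
Proof.
  rewrite cinner_BBs, Csum_Re. unfold sqnorm. apply rsum_ext. intros. rewrite Cmul_conj_self.
  reflexivity.
Qed.

Lemma Cconj_scale r z : Cconj (Cscale r z) = Cscale r (Cconj z).
Proof. ring_Cx. Qed.

Lemma Cmul_scale_l r z w : Cmul (Cscale r z) w = Cscale r (Cmul z w).
Proof. ring_Cx. Qed.
Lemma Cmul_scale_r r z w : Cmul z (Cscale r w) = Cscale r (Cmul z w).
Proof. ring_Cx. Qed.

Lemma adjB_formula n Nn K th S x l :
  adjB n Nn K th S x l =
  Cscale (/ sqrt (INR Nn)) (Csum K (fun k => Cmul (Cconj (S k l)) (cinner n (steers n th k) x))).
Proof.
  unfold adjB, Bmat, cinner, steers.
  rewrite <- Csum_scale.
  rewrite (Csum_ext K _ (fun k => Csum n (fun i => Cscale (/ sqrt (INR Nn)) (Cmul (Cconj (S k l)) (Cmul (Cconj (steer n (th k) i)) (x i)))))).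
  - rewrite Csum_swap. apply Csum_ext; intros i _.
    rewrite Cconj_scale, Csum_conj, Cmul_scale_l, Csum_scale. f_equal.
    rewrite <- Csum_mul_r. apply Csum_ext; intros. ring_Cx.
  - intros k _. rewrite Csum_scale, Csum_mul_l. reflexivity.
Qed.

Definition BBs_coef (n Nn K : nat) (th : nat -> R) (S : nat -> nat -> Cx) (x : nat -> Cx)
    : nat -> Cx :=
  fun k => Cscale (/ sqrt (INR Nn)) (Csum Nn (fun l => Cmul (S k l) (adjB n Nn K th S x l))).

Lemma BBs_matvec n Nn K th S x i :
  matvec n (BBs n Nn K th S) x i = synthesis K (steers n th) (BBs_coef n Nn K th S x) i.
Proof.
  unfold matvec, BBs, synthesis, BBs_coef, steers.
  transitivity (Csum Nn (fun l => Cmul (Bmat n Nn K th S i l) (adjB n Nn K th S x l))).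
  - unfold adjB.
    rewrite (Csum_ext n _ (fun i' => Csum Nn (fun l => Cmul (Bmat n Nn K th S i l) (Cmul (Cconj (Bmat n Nn K th S i' l)) (x i'))))).
    + rewrite Csum_swap. apply Csum_ext; intros l _. rewrite Csum_mul_l. reflexivity.
    + intros i' _. rewrite <- Csum_mul_r. apply Csum_ext; intros. ring_Cx.
  - unfold Bmat.
    rewrite (Csum_ext Nn _ (fun l => Csum K (fun k => Cmul (steer n (th k) i)
        (Cscale (/ sqrt (INR Nn)) (Cmul (S k l) (adjB n Nn K th S x l)))))).
    + rewrite Csum_swap. apply Csum_ext; intros k _.
      rewrite <- Csum_scale, <- Csum_mul_l. apply Csum_ext; intros. reflexivity.
    + intros l _. rewrite Cmul_scale_l, <- Csum_mul_r, <- Csum_scale. apply Csum_ext; intros.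
      ring_Cx.
Qed.

Lemma cinner_scale_r n x r y : cinner n x (fun i => Cscale r (y i)) = Cscale r (cinner n x y).
Proof. unfold cinner. rewrite <- Csum_scale. apply Csum_ext; intros. ring_Cx. Qed.

Lemma cinner_conj n x y : cinner n y x = Cconj (cinner n x y).
Proof. unfold cinner. rewrite Csum_conj. apply Csum_ext; intros. ring_Cx. Qed.

Lemma rsum_trunc n m f : (m <= n)%nat -> (forall j, (m <= j)%nat -> (j < n)%nat -> f j = 0) ->
  rsum n f = rsum m f.
Proof.
  intros Hmn. induction n; intros H.
  - replace m with 0%nat by lia. reflexivity.
  - destruct (Nat.eq_dec m (S n)) as [->|Hne]; [reflexivity|].
    simpl. rewrite IHn by (lia || (intros; apply H; lia)). rewrite H by lia. ring.
Qed.

Lemma synthesis_scale K a r c i : Cscale r (synthesis K a c i) = synthesis K a (fun k => Cscale r (c k)) i.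
Proof. unfold synthesis. rewrite <- Csum_scale. apply Csum_ext; intros. ring_Cx. Qed.

Lemma qform_PiMat n K u x :
  qform n (PiMat K u) x x =
  Cadd (cinner n x x) (Copp (Csum K (fun k => Cmul (Cconj (cinner n (u k) x)) (cinner n (u k) x)))).
Proof.
  unfold qform, PiMat, cinner.
  transitivity (Csum n (fun i => Cadd (Cmul (Cconj (x i)) (x i))
     (Copp (Csum K (fun k => Csum n (fun i' => Cmul (Cmul (Cconj (x i)) (u k i)) (Cmul (Cconj (u k i')) (x i')))))))).
  - apply Csum_ext; intros i Hi.
    rewrite (Csum_ext n _ (fun i' => Cadd (Cmul (Cmul (Cconj (x i)) (x i')) (kron i i'))
        (Copp (Csum K (fun k => Cmul (Cmul (Cconj (x i)) (u k i)) (Cmul (Cconj (u k i')) (x i'))))))).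
    + rewrite Csum_add. f_equal.
      * rewrite <- (Csum_kron_r n (fun i' => Cmul (Cconj (x i)) (x i')) i Hi).
        apply Csum_ext; intros i' _. unfold kron. rewrite Nat.eqb_sym. reflexivity.
      * rewrite Csum_opp. f_equal. apply Csum_swap.
    + intros i' _. unfold kron.
      rewrite (Csum_ext K (fun k => Cmul (Cmul (Cconj (x i)) (u k i)) (Cmul (Cconj (u k i')) (x i'))) (fun k => Cmul (Cconj (x i)) (Cmul (Cmul (u k i) (Cconj (u k i'))) (x i')))).
      2:{ intros; ring_Cx. }
      rewrite Csum_mul_l, Csum_mul_r.
      set (s := Csum K _). destruct (i =? i')%nat; ring_Cx.
  - rewrite Csum_add, Csum_opp. f_equal. f_equal. rewrite Csum_swap.
    apply Csum_ext; intros k _. rewrite Csum_conj, Csum_prod.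
    apply Csum_ext; intros i _. apply Csum_ext; intros i' _. ring_Cx.
Qed.

Lemma Re_qform_PiMat n K u x :
  Re (qform n (PiMat K u) x x) = sqnorm n x - rsum K (fun j => Cabs2 (cinner n (u j) x)).
Proof.
  rewrite qform_PiMat, cinner_self. simpl. rewrite Csum_Re.
  unfold Rminus. f_equal. f_equal. apply rsum_ext; intros. rewrite Cmul_conj_self. reflexivity.
Qed.

Definition noise_part (K : nat) (f : nat -> Cx) : nat -> Cx :=
  fun j => if (j <? K)%nat then C0 else f j.
Definition signal_part (K : nat) (f : nat -> Cx) : nat -> Cx :=
  fun j => if (j <? K)%nat then f j else C0.

Lemma sqnorm_signal_part n K f : (K <= n)%nat ->
  sqnorm n (signal_part K f) = rsum K (fun j => Cabs2 (f j)).
Proof.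
  intros H. unfold sqnorm, signal_part. rewrite (rsum_trunc n K); [| auto |].
  - apply rsum_ext; intros j Hj.
    replace (j <? K)%nat with true by (symmetry; apply Nat.ltb_lt; auto). reflexivity.
  - intros j Hj _. replace (j <? K)%nat with false by (symmetry; apply Nat.ltb_ge; auto).
    unfold Cabs2; simpl; ring.
Qed.

Lemma sqnorm_split n K f : (K <= n)%nat ->
  sqnorm n f = rsum K (fun j => Cabs2 (f j)) + sqnorm n (noise_part K f).
Proof.
  intros H. rewrite <- (sqnorm_signal_part n K f) by auto. unfold sqnorm. rewrite <- rsum_add.
  apply rsum_ext; intros j _.
  unfold signal_part, noise_part. destruct (j <? K)%nat; unfold Cabs2; simpl; ring.
Qed.

Lemma le_div_of_sq_le_mul (T b c mA : R) : 0 < mA -> 0 <= T -> 0 <= c -> 0 <= b -> T ^ 2 <= c * b ->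
  mA * c <= T -> T <= b / mA.
Proof.
  intros. apply Rmult_le_reg_r with mA; auto. unfold Rdiv.
  rewrite Rmult_assoc, Rinv_l, Rmult_1_r by lra.
  destruct (Req_dec T 0) as [Z|NZ]. { subst. nra. }
  assert (T ^ 2 * mA <= T * b).
  { assert (T ^ 2 * mA <= c * b * mA) by (apply Rmult_le_compat_r; lra).
    assert (c * b * mA <= T * b) by nra. lra. }
  nra.
Qed.

Lemma qform_Dmat n x y v w :
  qform n (Dmat x y) v w = Cadd (Cmul (cinner n v x) (cinner n y w)) (Cmul (cinner n v y) (cinner n x w)).
Proof.
  unfold qform, Dmat, cinner. rewrite !Csum_prod, <- Csum_add. apply Csum_ext; intros i _.
  rewrite <- Csum_add. apply Csum_ext; intros j _. ring_Cx.
Qed.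

Lemma rsum_prod n m f g : rsum n (fun i => rsum m (fun j => f i * g j)) = rsum n f * rsum m g.
Proof.
  rewrite Rmult_comm, <- rsum_scal. apply rsum_ext; intros. rewrite Rmult_comm, <- rsum_scal.
  apply rsum_ext; intros. ring.
Qed.

Lemma nonincreasing_le K (f : nat -> R) : (forall j, (j + 1 < K)%nat -> f (j + 1)%nat <= f j) ->
  forall j j', (j <= j')%nat -> (j' < K)%nat -> f j' <= f j.
Proof.
  intros H j j' Hjj'. induction j' as [|j' IH]; intros Hj'.
  - replace j with 0%nat by lia. lra.
  - destruct (Nat.eq_dec j (S j')) as [->|Hne]; [lra|].
    pose proof (H j' ltac:(lia)). replace (j' + 1)%nat with (S j') in H0 by lia.
    pose proof (IH ltac:(lia) ltac:(lia)). lra.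
Qed.

Section EigenBasis.
Variables (n Nn K : nat) (th : nat -> R) (S : nat -> nat -> Cx) (u : nat -> nat -> Cx) (lam : nat -> R).
Hypothesis Hon : orthonormal n n u.
Hypothesis Heig : forall j, (j < n)%nat -> is_eigvec n (BBs n Nn K th S) (lam j) (u j).
Hypothesis Hord : forall j, (j + 1 < K)%nat -> lam (j + 1)%nat <= lam j.
Hypothesis Hzero : forall j, (K <= j)%nat -> (j < n)%nat -> lam j = 0.
Hypothesis HKn : (K < n)%nat.
Hypothesis HN : (0 < Nn)%nat.
Hypothesis HSinj : forall y : nat -> Cx,
  (forall l, (l < Nn)%nat -> Csum K (fun k => Cmul (Cconj (S k l)) (y k)) = C0) ->
  forall k, (k < K)%nat -> y k = C0.

Let a := steers n th.

Lemma u_unit j : (j < n)%nat -> cinner n (u j) (u j) = C1.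
Proof. intros. rewrite Hon by auto. rewrite Nat.eqb_refl. reflexivity. Qed.

Lemma lam_eq_sqnorm_adjB j : (j < n)%nat -> lam j = sqnorm Nn (adjB n Nn K th S (u j)).
Proof.
  intros Hj. rewrite <- Re_cinner_BBs.
  rewrite (cinner_ext n _ _ (u j) (fun i => Cscale (lam j) (u j i))); [| auto | intros i Hi; apply Heig; auto].
  rewrite cinner_scale_r, u_unit by auto. simpl. ring.
Qed.

Lemma lam_nonneg j : (j < n)%nat -> 0 <= lam j.
Proof. intros. rewrite lam_eq_sqnorm_adjB by auto. apply sqnorm_nonneg. Qed.

Lemma lam0_orth_steers j : (j < n)%nat -> lam j = 0 -> forall k, (k < K)%nat ->
  cinner n (a k) (u j) = C0.
Proof.
  intros Hj H0. rewrite lam_eq_sqnorm_adjB in H0 by auto.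
  apply HSinj. intros l Hl.
  pose proof (sqnorm_zero _ _ H0 l Hl) as E. rewrite adjB_formula in E.
  assert (Hs : 0 < sqrt (INR Nn)) by (apply sqrt_lt_R0; apply lt_0_INR; auto).
  destruct (Csum K _) as [p q] eqn:Eq. unfold Cscale in E. simpl in E. injection E as E1 E2.
  apply Cx_eq; simpl.
  - assert (/ sqrt (INR Nn) <> 0) by (apply Rinv_neq_0_compat; lra). nra.
  - assert (/ sqrt (INR Nn) <> 0) by (apply Rinv_neq_0_compat; lra). nra.
Qed.

Lemma noise_orth_steers l : (K <= l)%nat -> (l < n)%nat -> forall k, (k < K)%nat ->
  cinner n (a k) (u l) = C0.
Proof. intros. apply lam0_orth_steers; auto. Qed.

Lemma analysis_sqnorm_le MA : 0 <= MA ->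
  (forall c, sqnorm n (synthesis K a c) <= MA * sqnorm K c) ->
  forall x, sqnorm K (analysis n a x) <= MA * sqnorm n x.
Proof.
  intros HM0 HM x. set (y := analysis n a x).
  assert (E : cinner n (synthesis K a y) x = cinner K y y) by (rewrite cinner_synthesis; reflexivity).
  rewrite cinner_self in E.
  assert (E2 : Re (cinner n (synthesis K a y) x) = sqnorm K y) by (rewrite E; reflexivity).
  pose proof (Cauchy_Schwarz n (synthesis K a y) x) as HC.
  pose proof (Re_le_abs (cinner n (synthesis K a y) x)) as HR.
  rewrite E2 in HR. pose proof (HM y). pose proof (sqnorm_nonneg K y).
  pose proof (sqnorm_nonneg n x).
  pose proof (sqnorm_nonneg n (synthesis K a y)).
  destruct (Req_dec (sqnorm K y) 0) as [Z|NZ]. { rewrite Z. nra. }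
  assert (sqnorm K y ^ 2 <= MA * sqnorm K y * sqnorm n x).
  { eapply Rle_trans. apply HR. eapply Rle_trans. apply HC. apply Rmult_le_compat_r; nra. }
  nra.
Qed.

Variable MA : R.
Hypothesis HMA0 : 0 <= MA.
Hypothesis HMA : forall c, sqnorm n (synthesis K a c) <= MA * sqnorm K c.
Hypothesis HMAK : INR (K - 1) * MA < INR K.
Hypothesis Hanorm : forall k, (k < K)%nat -> sqnorm n (a k) = 1.

(* If lam_{K-1} vanished, each unit vector a_k would expand on the first K - 1 eigenvectors
   only, and summing Parseval over k would give K <= (K - 1) MA. *)
Lemma lam_last_pos : 0 < lam (K - 1)%nat.
Proof.
  destruct (lam_nonneg (K - 1) ltac:(lia)) as [P|Z]; [exact P|]. exfalso.
  assert (Hp : forall l, (K - 1 <= l)%nat -> (l < n)%nat -> forall k, (k < K)%nat -> cinner n (a k) (u l) = C0).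
  { intros l Hl1 Hl2 k Hk. apply lam0_orth_steers; auto.
    destruct (Nat.eq_dec l (K-1)) as [->|]; [auto|]. apply Hzero; lia. }
  assert (E1 : forall k, (k < K)%nat -> 1 = rsum (K - 1) (fun j => Cabs2 (cinner n (a k) (u j)))).
  { intros k Hk. rewrite <- (Hanorm k Hk). rewrite (sqnorm_parseval n u Hon).
    rewrite (rsum_trunc n (K-1)); [| lia |].
    - apply rsum_ext; intros. rewrite cinner_conj, Cabs2_conj. reflexivity.
    - intros j Hj1 Hj2. rewrite cinner_conj, Hp by auto. unfold Cabs2; simpl; ring. }
  assert (E2 : INR K = rsum (K - 1) (fun j => sqnorm K (analysis n a (u j)))).
  { unfold sqnorm, analysis. rewrite <- rsum_swap.
    rewrite <- (rsum_ext K (fun _ => 1)). rewrite rsum_const; ring.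
    intros k Hk. apply E1; auto. }
  assert (E3 : rsum (K - 1) (fun j => sqnorm K (analysis n a (u j))) <= rsum (K - 1) (fun _ => MA)).
  { apply rsum_le. intros j Hj. pose proof (analysis_sqnorm_le MA HMA0 HMA (u j)).
    assert (sqnorm n (u j) = 1).
    { pose proof (u_unit j ltac:(lia)) as U. rewrite cinner_self in U. injection U. auto. }
    nra. }
  rewrite rsum_const in E3. lra.
Qed.

Lemma lam_pos j : (j < K)%nat -> 0 < lam j.
Proof.
  intros Hj. pose proof (nonincreasing_le K lam Hord j (K - 1) ltac:(lia) ltac:(lia)).
  pose proof lam_last_pos. lra.
Qed.

(* u_j = B B^* u_j / lam_j lies in the span of the steering vectors. *)
Definition signal_coef (j : nat) : nat -> Cx :=
  fun k => Cscale (/ lam j) (BBs_coef n Nn K th S (u j) k).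

Lemma u_signal_lincomb j : (j < K)%nat -> forall i, (i < n)%nat ->
  u j i = synthesis K a (signal_coef j) i.
Proof.
  intros Hj i Hi. unfold signal_coef. rewrite <- synthesis_scale. fold a. unfold a.
  rewrite <- BBs_matvec.
  rewrite Heig by (auto || lia). pose proof (lam_pos j Hj).
  apply Cx_eq; simpl; field; lra.
Qed.

Lemma signal_orth w : (forall k, (k < K)%nat -> cinner n (a k) w = C0) ->
  forall j, (j < K)%nat -> cinner n (u j) w = C0.
Proof.
  intros Hw j Hj. rewrite (cinner_ext n (u j) w (synthesis K a (signal_coef j)) w).
  - rewrite cinner_synthesis. unfold cinner. apply Csum_zero. intros k Hk. unfold analysis.
    rewrite Hw by auto. ring_Cx.
  - apply u_signal_lincomb; auto.
  - auto.
Qed.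

Definition piform (x : nat -> Cx) : R := Re (qform n (PiMat K u) x x).

Lemma piform_tail x : piform x = sqnorm n (noise_part K (fun j => cinner n (u j) x)).
Proof.
  unfold piform. rewrite Re_qform_PiMat. rewrite (sqnorm_parseval n u Hon x).
  fold (sqnorm n (fun j => cinner n (u j) x)). rewrite (sqnorm_split n K) by lia. ring.
Qed.

Lemma piform_test_vector w x : (forall k, (k < K)%nat -> cinner n (a k) w = C0) ->
  Cabs2 (cinner n w x) <= sqnorm n w * piform x.
Proof.
  intros Hw. rewrite piform_tail. rewrite (cinner_parseval n u Hon w x).
  rewrite (sqnorm_parseval n u Hon w).
  fold (sqnorm n (fun j => cinner n (u j) w)).
  replace (Csum n (fun j => Cmul (Cconj (cinner n (u j) w)) (cinner n (u j) x)))
    with (cinner n (fun j => cinner n (u j) w) (noise_part K (fun j => cinner n (u j) x))).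
  - apply Cauchy_Schwarz.
  - unfold cinner at 1. apply Csum_ext. intros j Hj. unfold noise_part.
    destruct (Nat.ltb_spec j K).
    + rewrite (signal_orth w Hw j) by auto. ring_Cx.
    + reflexivity.
Qed.

Lemma steer_energy_le_signal k x : (k < K)%nat ->
  Cabs2 (cinner n (a k) x) <= rsum K (fun j => Cabs2 (cinner n (u j) x)).
Proof.
  intros Hk. rewrite (cinner_parseval n u Hon (a k) x).
  replace (Csum n (fun j => Cmul (Cconj (cinner n (u j) (a k))) (cinner n (u j) x)))
    with (cinner n (signal_part K (fun j => cinner n (u j) (a k))) (signal_part K (fun j => cinner n (u j) x))).
  - eapply Rle_trans. apply Cauchy_Schwarz. rewrite !sqnorm_signal_part by lia.
    assert (E : rsum K (fun j => Cabs2 (cinner n (u j) (a k))) = 1).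
    { rewrite <- (Hanorm k Hk), (sqnorm_parseval n u Hon (a k)).
      fold (sqnorm n (fun j => cinner n (u j) (a k))).
      rewrite (sqnorm_split n K) by lia.
      assert (Z : sqnorm n (noise_part K (fun j => cinner n (u j) (a k))) = 0).
      { apply rsum_zero. intros j Hj. unfold noise_part. destruct (Nat.ltb_spec j K).
        unfold Cabs2; simpl; ring.
        rewrite cinner_conj, noise_orth_steers by auto. unfold Cabs2; simpl; ring. }
      rewrite Z. ring. }
    rewrite E. lra.
  - unfold cinner at 1. apply Csum_ext. intros j Hj. unfold signal_part.
    destruct (Nat.ltb_spec j K).
    + reflexivity.
    + rewrite cinner_conj, noise_orth_steers by auto. ring_Cx.
Qed.

Lemma cinner_comb (t : nat -> Cx) (y : nat -> Cx) z :
  (forall i, (i < n)%nat -> y i = Csum K (fun j => Cmul (t j) (u j i))) ->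
  cinner n y z = Csum K (fun j => Cmul (Cconj (t j)) (cinner n (u j) z)).
Proof.
  intros Hy. unfold cinner.
  rewrite (Csum_ext n _ (fun i => Csum K (fun j => Cmul (Cconj (t j)) (Cmul (Cconj (u j i)) (z i))))).
  - rewrite Csum_swap. apply Csum_ext; intros. rewrite Csum_mul_l. reflexivity.
  - intros i Hi. rewrite Hy, Csum_conj by auto. rewrite <- Csum_mul_r. apply Csum_ext; intros.
    ring_Cx.
Qed.

(* The signal component of x is y = A c with c = sum_j <u_j, x> signal_coef j; then
   |y|^2 = <y, x> = <c, A^* x>, and Cauchy-Schwarz with mA |c|^2 <= |y|^2 concludes. *)
Lemma signal_energy_le_analysis mA x : 0 < mA ->
  (forall c, mA * sqnorm K c <= sqnorm n (synthesis K a c)) ->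
  rsum K (fun j => Cabs2 (cinner n (u j) x)) <= sqnorm K (analysis n a x) / mA.
Proof.
  intros HmA HA.
  set (t := fun j => cinner n (u j) x).
  set (c := fun k => Csum K (fun j => Cmul (t j) (signal_coef j k))).
  set (y := synthesis K a c).
  assert (Hy : forall i, (i < n)%nat -> y i = Csum K (fun j => Cmul (t j) (u j i))).
  { intros i Hi. unfold y, synthesis, c.
    rewrite (Csum_ext K (fun j => Cmul (t j) (u j i)) (fun j => Csum K (fun k => Cmul (a k i) (Cmul (t j) (signal_coef j k))))).
    - rewrite Csum_swap. apply Csum_ext; intros. rewrite Csum_mul_l. reflexivity.
    - intros j Hj. rewrite u_signal_lincomb by auto. unfold synthesis. rewrite <- Csum_mul_l.
      apply Csum_ext; intros. ring_Cx. }
  set (T := rsum K (fun j => Cabs2 (t j))).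
  assert (E1 : Re (cinner n y x) = T).
  { rewrite (cinner_comb t y x Hy), Csum_Re. apply rsum_ext; intros. fold (t i).
    rewrite Cmul_conj_self. reflexivity. }
  assert (Hu : forall j, (j < K)%nat -> cinner n (u j) y = t j).
  { intros j Hj. rewrite cinner_conj, (cinner_comb t y (u j) Hy).
    rewrite (Csum_ext K _ (fun j' => Cmul (Cconj (t j')) (kron j' j))).
    - rewrite Csum_kron_r by auto. ring_Cx.
    - intros j' Hj'. rewrite Hon by lia. reflexivity. }
  assert (E2 : sqnorm n y = T).
  { assert (H := cinner_comb t y y Hy). rewrite cinner_self in H. apply (f_equal Re) in H.
    simpl in H.
    rewrite H, Csum_Re. apply rsum_ext; intros j Hj.
    rewrite Hu by auto. rewrite Cmul_conj_self. reflexivity. }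
  assert (E3 : cinner n y x = cinner K c (analysis n a x)) by (unfold y; apply cinner_synthesis).
  pose proof (Cauchy_Schwarz K c (analysis n a x)) as HC. rewrite <- E3 in HC.
  pose proof (Re_le_abs (cinner n y x)) as HR. rewrite E1 in HR.
  pose proof (HA c) as HAc. fold y in HAc. rewrite E2 in HAc.
  pose proof (sqnorm_nonneg K c). pose proof (sqnorm_nonneg K (analysis n a x)).
  assert (HT : 0 <= T) by (rewrite <- E2; apply sqnorm_nonneg).
  apply (le_div_of_sq_le_mul T (sqnorm K (analysis n a x)) (sqnorm K c) mA); auto.
  eapply Rle_trans. apply HR. exact HC.
Qed.

(* Keep only the (signal, noise) terms of gamma: there u_l^* a_k = 0, so each term factors as
   |u_j^* a_k|^2 |u_l^* d1|^2, and the double sum is |a_k|^2 piform d1 = piform d1. *)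
Lemma gamma_ge_piform (c s2 : R) (lamw : nat -> R) (wmin : R) d1 k :
  (k < K)%nat -> 0 <= wmin ->
  (forall j l, 0 <= vtheta c s2 K lamw j l) ->
  (forall j l, (j < K)%nat -> (K <= l)%nat -> wmin <= vtheta c s2 K lamw j l) ->
  wmin * piform d1 <= gammaN n K c s2 lamw u d1 (a k).
Proof.
  intros Hk Hw Hv0 Hv.
  set (A := fun j => if (j <? K)%nat then Cabs2 (cinner n (u j) (a k)) else 0).
  set (B := fun l => Cabs2 (noise_part K (fun j => cinner n (u j) d1) l)).
  assert (EA : rsum n A = 1).
  { unfold A. rewrite <- (Hanorm k Hk), (sqnorm_parseval n u Hon (a k)).
    fold (sqnorm n (fun j => cinner n (u j) (a k))). rewrite (sqnorm_split n K) by lia.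
    assert (Z : sqnorm n (noise_part K (fun j => cinner n (u j) (a k))) = 0).
    { apply rsum_zero. intros j Hj. unfold noise_part. destruct (Nat.ltb_spec j K).
      unfold Cabs2; simpl; ring.
      rewrite cinner_conj, noise_orth_steers by auto. unfold Cabs2; simpl; ring. }
    rewrite Z, Rplus_0_r. rewrite (rsum_trunc n K); [| lia |].
    - apply rsum_ext; intros j Hj. destruct (Nat.ltb_spec j K); [reflexivity| lia].
    - intros j Hj _. destruct (Nat.ltb_spec j K); [lia| reflexivity]. }
  assert (EB : rsum n B = piform d1) by (rewrite piform_tail; reflexivity).
  rewrite <- EB.
  replace (wmin * rsum n B) with (wmin * (rsum n A * rsum n B)) by (rewrite EA; ring).
  rewrite <- rsum_prod, <- rsum_scal. unfold gammaN. apply rsum_le; intros j Hj.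
  rewrite <- rsum_scal. apply rsum_le; intros l Hl.
  pose proof (Hv0 j l) as V0. pose proof (Cabs2_nonneg (qform n (Dmat d1 (a k)) (u j) (u l))) as Q0.
  assert (C00 : Cabs2 C0 = 0) by (unfold Cabs2; simpl; ring).
  unfold A, B, noise_part. destruct (Nat.ltb_spec j K); destruct (Nat.ltb_spec l K).
  - rewrite C00. nra.
  - rewrite qform_Dmat. rewrite (noise_orth_steers l) by auto.
    replace (Cadd (Cmul (cinner n (u j) d1) C0) (Cmul (cinner n (u j) (a k)) (cinner n d1 (u l))))
      with (Cmul (cinner n (u j) (a k)) (cinner n d1 (u l))) by ring_Cx.
    rewrite Cabs2_mul, (cinner_conj n d1 (u l)), Cabs2_conj.
    pose proof (Hv j l ltac:(auto) ltac:(lia)).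
    pose proof (Cabs2_nonneg (cinner n (u j) (a k))). pose proof (Cabs2_nonneg (cinner n (u l) d1)).
    apply Rmult_le_compat_r; [apply Rmult_le_pos; apply Cabs2_nonneg | lra].
  - rewrite C00. nra.
  - pose proof (Cabs2_nonneg (cinner n (u l) d1)). nra.
Qed.

End EigenBasis.

Lemma Cexpi_add a b : Cexpi (a + b) = Cmul (Cexpi a) (Cexpi b).
Proof. unfold Cexpi. apply Cx_eq; simpl; [rewrite cos_plus | rewrite sin_plus]; ring. Qed.
Lemma Cexpi_conj_mul a b : Cmul (Cconj (Cexpi a)) (Cexpi b) = Cexpi (b - a).
Proof. unfold Cexpi. apply Cx_eq; simpl; [rewrite cos_minus | rewrite sin_minus]; ring. Qed.

Definition expsum (n : nat) (p : R) : Cx := Csum n (fun m => Cexpi (INR m * p)).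
Definition mexpsum (n : nat) (p : R) : Cx := Csum n (fun m => Cscale (INR m) (Cexpi (INR m * p))).

Lemma expsum_closed n p : Cmul (Cadd C1 (Copp (Cexpi p))) (expsum n p) = Cadd C1 (Copp (Cexpi (INR n * p))).
Proof.
  unfold expsum. induction n; simpl Csum.
  - simpl. unfold Cexpi. rewrite Rmult_0_l, cos_0, sin_0. ring_Cx.
  - rewrite S_INR. replace ((INR n + 1) * p) with (INR n * p + p) by ring. rewrite Cexpi_add.
    replace (Cmul (Cadd C1 (Copp (Cexpi p))) (Cadd (Csum n (fun m => Cexpi (INR m * p))) (Cexpi (INR n * p))))
     with (Cadd (Cmul (Cadd C1 (Copp (Cexpi p))) (Csum n (fun m => Cexpi (INR m * p))))
               (Cmul (Cadd C1 (Copp (Cexpi p))) (Cexpi (INR n * p)))) by ring_Cx.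
    rewrite IHn. ring_Cx.
Qed.

Lemma mexpsum_closed n p : Cmul (Cadd C1 (Copp (Cexpi p))) (mexpsum n p) =
  Cadd (Cadd (expsum n p) (Copp C1)) (Copp (Cscale (INR n - 1) (Cexpi (INR n * p)))).
Proof.
  unfold mexpsum, expsum. induction n; simpl Csum.
  - simpl. unfold Cexpi. rewrite Rmult_0_l, cos_0, sin_0. ring_Cx.
  - rewrite S_INR. replace ((INR n + 1) * p) with (INR n * p + p) by ring. rewrite Cexpi_add.
    replace (Cmul (Cadd C1 (Copp (Cexpi p))) (Cadd (Csum n (fun m => Cscale (INR m) (Cexpi (INR m * p)))) (Cscale (INR n) (Cexpi (INR n * p)))))
     with (Cadd (Cmul (Cadd C1 (Copp (Cexpi p))) (Csum n (fun m => Cscale (INR m) (Cexpi (INR m * p)))))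
               (Cmul (Cadd C1 (Copp (Cexpi p))) (Cscale (INR n) (Cexpi (INR n * p))))) by ring_Cx.
    rewrite IHn. ring_Cx.
Qed.

Lemma inv_sqrt_sq n : (0 < n)%nat -> / sqrt (INR n) * / sqrt (INR n) = / INR n.
Proof.
  intros H. rewrite <- Rinv_mult. rewrite sqrt_sqrt; auto. apply pos_INR.
Qed.

Lemma cinner_steer n t t' : (0 < n)%nat ->
  cinner n (steer n t) (steer n t') = Cscale (/ INR n) (expsum n (t' - t)).
Proof.
  intros Hn. unfold cinner, steer, expsum. rewrite <- Csum_scale. apply Csum_ext; intros m _.
  rewrite Cconj_scale, Cmul_scale_l, Cmul_scale_r, Cexpi_conj_mul.
  unfold Cscale at 1 2 3. apply Cx_eq; simpl; rewrite <- (inv_sqrt_sq n Hn);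
  replace (INR m * t' - INR m * t) with (INR m * (t' - t)) by ring; ring.
Qed.

Definition dvec (n Nn : nat) (t : R) : nat -> Cx := fun i => Cscale (/ INR Nn) (steer' n t i).

Lemma cinner_steer_dvec n Nn t t' : (0 < n)%nat ->
  cinner n (steer n t) (dvec n Nn t') = Cscale (/ INR Nn * / INR n) (Cmul (mkC 0 1) (mexpsum n (t' - t))).
Proof.
  intros Hn. unfold cinner, steer, dvec, steer', mexpsum.
  rewrite <- Csum_mul_l, <- Csum_scale. apply Csum_ext; intros m _.
  replace (Cexpi (INR m * t')) with (Cmul (Cexpi (INR m * t)) (Cexpi (INR m * (t' - t))))
    by (rewrite <- Cexpi_add; f_equal; ring).
  set (E := Cexpi (INR m * t)). set (F := Cexpi (INR m * (t' - t))).
  set (s := / sqrt (INR n)).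
  transitivity (Cmul (Cmul (Cconj E) E) (Cscale (/ INR Nn * (s * s)) (Cmul (mkC 0 1) (Cscale (INR m) F)))).
  - ring_Cx.
  - rewrite Cmul_conj_self. assert (HE : Cabs2 E = 1) by apply Cabs2_expi. rewrite HE.
    unfold s. rewrite (inv_sqrt_sq n Hn). ring_Cx.
Qed.

Lemma sqnorm_steer n t : (0 < n)%nat -> sqnorm n (steer n t) = 1.
Proof.
  intros Hn. unfold sqnorm, steer. rewrite (rsum_ext n _ (fun _ => / INR n)).
  - rewrite rsum_const. field. apply not_0_INR; lia.
  - intros m _. rewrite Cabs2_scale, Cabs2_expi. rewrite <- (inv_sqrt_sq n Hn). ring.
Qed.

Lemma sum_sq n : rsum n (fun m => INR m ^ 2) = INR n * (INR n - 1) * (2 * INR n - 1) / 6.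
Proof.
  induction n. simpl; field. change (rsum (S n) ?f) with (rsum n f + f n). rewrite IHn, S_INR.
  field.
Qed.

Lemma sum_lin n : rsum n (fun m => INR m) = INR n * (INR n - 1) / 2.
Proof.
  induction n. simpl; field. change (rsum (S n) ?f) with (rsum n f + f n). rewrite IHn, S_INR.
  field.
Qed.

Lemma sqnorm_dvec n Nn t : (0 < n)%nat -> (0 < Nn)%nat ->
  sqnorm n (dvec n Nn t) = (INR n - 1) * (2 * INR n - 1) / (6 * INR Nn ^ 2).
Proof.
  intros Hn HN. unfold sqnorm, dvec, steer'.
  rewrite (rsum_ext n _ (fun m => (/ INR Nn) ^ 2 * / INR n * INR m ^ 2)).
  - rewrite rsum_scal, sum_sq. field. split; apply not_0_INR; lia.
  - intros m _. rewrite !Cabs2_scale, Cabs2_mul, Cabs2_expi.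
    replace ((/ sqrt (INR n)) ^ 2) with (/ sqrt (INR n) * / sqrt (INR n)) by ring.
    rewrite inv_sqrt_sq by auto. unfold Cabs2; simpl. ring.
Qed.

Lemma mexpsum_0 n : mexpsum n 0 = mkC (INR n * (INR n - 1) / 2) 0.
Proof.
  unfold mexpsum. apply Cx_eq.
  - rewrite Csum_Re. simpl. rewrite <- sum_lin. apply rsum_ext; intros. rewrite Rmult_0_r, cos_0.
    ring.
  - rewrite Csum_Im. simpl. apply rsum_zero; intros. rewrite Rmult_0_r, sin_0. ring.
Qed.

Lemma Cabs2_one_minus p : Cabs2 (Cadd C1 (Copp (Cexpi p))) = 2 - 2 * cos p.
Proof. unfold Cabs2, Cexpi; simpl. pose proof (sin2_cos2 p) as H. unfold Rsqr in H. nra. Qed.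

Lemma Cabs2_expsum n p : (2 - 2 * cos p) * Cabs2 (expsum n p) = 2 - 2 * cos (INR n * p).
Proof.
  rewrite <- !Cabs2_one_minus, <- Cabs2_mul, expsum_closed. reflexivity.
Qed.

Lemma Cabs2_expsum_le n p : 0 < 2 - 2 * cos p -> Cabs2 (expsum n p) <= 4 / (2 - 2 * cos p).
Proof.
  intros HD. pose proof (Cabs2_expsum n p). pose proof (COS_bound (INR n * p)).
  apply Rmult_le_reg_l with (2 - 2 * cos p); auto. unfold Rdiv. rewrite <- Rmult_assoc.
  rewrite (Rmult_comm _ 4), Rmult_assoc, Rinv_r by lra. lra.
Qed.

Lemma Cabs2_mexpsum_le n p : 0 < 2 - 2 * cos p ->
  Cabs2 (mexpsum n p) <= (16 / (2 - 2 * cos p) + 4 + 2 * (INR n - 1) ^ 2) / (2 - 2 * cos p).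
Proof.
  intros HD. set (D := 2 - 2 * cos p) in *.
  assert (E : D * Cabs2 (mexpsum n p) = Cabs2 (Cadd (Cadd (expsum n p) (Copp C1)) (Copp (Cscale (INR n - 1) (Cexpi (INR n * p)))))).
  { unfold D. rewrite <- Cabs2_one_minus, <- Cabs2_mul, mexpsum_closed. reflexivity. }
  pose proof (Cabs2_add_le (Cadd (expsum n p) (Copp C1)) (Copp (Cscale (INR n - 1) (Cexpi (INR n * p))))) as H1.
  rewrite Cabs2_opp, Cabs2_scale, Cabs2_expi in H1.
  pose proof (Cabs2_add_le (expsum n p) (Copp C1)) as H2. rewrite Cabs2_opp in H2.
  replace (Cabs2 C1) with 1 in H2 by (unfold Cabs2; simpl; ring).
  pose proof (Cabs2_expsum_le n p HD) as H3. fold D in H3.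
  apply Rmult_le_reg_l with D; auto. unfold Rdiv.
  rewrite (Rmult_comm (_ + _)), <- Rmult_assoc, Rinv_r by lra.
  rewrite E. lra.
Qed.

Lemma Cabs2_expi_diff a b : Cabs2 (Cadd (Cexpi a) (Copp (Cexpi b))) = 2 - 2 * cos (a - b).
Proof.
  unfold Cabs2, Cexpi; simpl. rewrite cos_minus.
  pose proof (sin2_cos2 a) as Ha. pose proof (sin2_cos2 b) as Hb. unfold Rsqr in *. nra.
Qed.

Lemma sinc_sq x : 0 < x -> sinc x ^ 2 = (2 - 2 * cos (2 * x)) / (4 * x ^ 2).
Proof.
  intros Hx. unfold sinc. destruct (Req_EM_T x 0) as [E|E]; [lra|].
  rewrite cos_2a_sin. field. auto.
Qed.

Lemma cos_eq_1_2PI x : cos x = 1 -> exists z : Z, x = 2 * PI * IZR z.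
Proof.
  intros H. assert (Hs : sin (x / 2) = 0).
  { pose proof (cos_2a_sin (x / 2)) as E. replace (2 * (x / 2)) with x in E by field.
    rewrite H in E. assert (sin (x/2) * sin (x/2) = 0) by lra. nra. }
  destruct (sin_eq_0_0 _ Hs) as [z Hz]. exists z. lra.
Qed.

Lemma one_sub_cos_pos x : (forall z : Z, x <> 2 * PI * IZR z) -> 0 < 2 - 2 * cos x.
Proof.
  intros H. pose proof (COS_bound x). destruct (Req_dec (cos x) 1) as [E|E].
  - destruct (cos_eq_1_2PI x E) as [z Hz]. exfalso. apply (H z). auto.
  - lra.
Qed.

Lemma Cabs2_cinner_steer_le n t t' : (0 < n)%nat -> 0 < 2 - 2 * cos (t' - t) ->
  Cabs2 (cinner n (steer n t) (steer n t')) <= / INR n * / INR n * (4 / (2 - 2 * cos (t' - t))).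
Proof.
  intros Hn HD. rewrite cinner_steer by auto. rewrite Cabs2_scale.
  replace ((/ INR n) ^ 2) with (/ INR n * / INR n) by ring.
  apply Rmult_le_compat_l; [| apply Cabs2_expsum_le; auto].
  assert (0 < / INR n) by (apply Rinv_0_lt_compat, lt_0_INR; auto). nra.
Qed.

Lemma Cabs2_cinner_steer_dvec_le n Nn t t' : (0 < n)%nat -> (0 < Nn)%nat ->
  let D := 2 - 2 * cos (t' - t) in 0 < D ->
  Cabs2 (cinner n (steer n t) (dvec n Nn t')) <=
    (/ INR Nn) ^ 2 * (/ INR n) ^ 2 * ((16 / D + 4) / D) + 2 * (/ INR Nn) ^ 2 / D.
Proof.
  intros Hn HN D HD. rewrite cinner_steer_dvec by auto. rewrite Cabs2_scale_I.
  pose proof (Cabs2_mexpsum_le n (t' - t) HD) as HT. fold D in HT.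
  assert (0 < INR n) by (apply lt_0_INR; auto). assert (0 < INR Nn) by (apply lt_0_INR; auto).
  set (iN := / INR Nn). set (iM := / INR n). set (T := Cabs2 (mexpsum n (t' - t))) in *.
  assert (HiM : iM * INR n = 1) by (unfold iM; field; lra).
  assert (0 < iM) by (unfold iM; apply Rinv_0_lt_compat; auto).
  assert (0 < iN) by (unfold iN; apply Rinv_0_lt_compat; auto).
  assert (Hsq : iM ^ 2 * (INR n - 1) ^ 2 <= 1).
  { assert (Hx : iM * (INR n - 1) = 1 - iM) by (rewrite Rmult_minus_distr_l, HiM; ring).
    replace (iM ^ 2 * (INR n - 1) ^ 2) with ((iM * (INR n - 1)) ^ 2) by ring. rewrite Hx.
    assert (iM <= 1).
    { apply (Rmult_le_reg_r (INR n)); auto. rewrite HiM.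
      assert (1 <= INR n) by (replace 1 with (INR 1) by reflexivity; apply le_INR; lia). nra. }
    nra. }
  assert (HT2 : T <= (16 / D + 4) / D + 2 * (INR n - 1) ^ 2 / D) by (unfold Rdiv in *; nra).
  assert (E1 : (iN * iM) ^ 2 * T <= (iN * iM) ^ 2 * ((16 / D + 4) / D + 2 * (INR n - 1) ^ 2 / D))
    by (apply Rmult_le_compat_l; [apply pow2_ge_0 | auto]).
  assert (E2 : (iN * iM) ^ 2 * (2 * (INR n - 1) ^ 2 / D) <= 2 * iN ^ 2 / D).
  { replace ((iN * iM) ^ 2 * (2 * (INR n - 1) ^ 2 / D))
      with (2 * iN ^ 2 / D * (iM ^ 2 * (INR n - 1) ^ 2)) by (field; lra).
    assert (0 <= 2 * iN ^ 2 / D) by (unfold Rdiv; apply Rmult_le_pos; [nra | left; apply Rinv_0_lt_compat; auto]).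
    nra. }
  nra.
Qed.

Definition in_window (s L i : nat) : bool := andb (s <=? i)%nat (i <? s + L)%nat.

Lemma Csum_window s L F n :
  Csum n (fun i => if in_window s L i then F (i - s)%nat else C0) = Csum (Nat.min L (n - s)) F.
Proof.
  induction n.
  - simpl. replace (Nat.min L 0) with 0%nat by lia. reflexivity.
  - change (Csum (S n) ?f) with (Cadd (Csum n f) (f n)). rewrite IHn. unfold in_window.
    destruct (Nat.leb_spec s n); destruct (Nat.ltb_spec n (s + L)); cbn [andb].
    + replace (Nat.min L (S n - s)) with (S (Nat.min L (n - s))) by lia.
      replace (Nat.min L (n - s)) with (n - s)%nat by lia. reflexivity.
    + replace (Nat.min L (S n - s)) with (Nat.min L (n - s)) by lia. ring_Cx.
    + replace (Nat.min L (S n - s)) with (Nat.min L (n - s)) by lia. ring_Cx.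
    + replace (Nat.min L (S n - s)) with (Nat.min L (n - s)) by lia. ring_Cx.
Qed.

Lemma rsum_window s L F n :
  rsum n (fun i => if in_window s L i then F (i - s)%nat else 0) = rsum (Nat.min L (n - s)) F.
Proof.
  induction n.
  - simpl. replace (Nat.min L 0) with 0%nat by lia. reflexivity.
  - change (rsum (S n) ?f) with (rsum n f + f n). rewrite IHn. unfold in_window.
    destruct (Nat.leb_spec s n); destruct (Nat.ltb_spec n (s + L)); cbn [andb].
    + replace (Nat.min L (S n - s)) with (S (Nat.min L (n - s))) by lia.
      replace (Nat.min L (n - s)) with (n - s)%nat by lia. reflexivity.
    + replace (Nat.min L (S n - s)) with (Nat.min L (n - s)) by lia. ring.
    + replace (Nat.min L (S n - s)) with (Nat.min L (n - s)) by lia. ring.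
    + replace (Nat.min L (S n - s)) with (Nat.min L (n - s)) by lia. ring.
Qed.

Definition window (s L : nat) (f : nat -> Cx) : nat -> Cx :=
  fun i => if in_window s L i then f (i - s)%nat else C0.

Lemma cinner_window n s L f x : (s + L <= n)%nat ->
  cinner n (window s L f) x = Csum L (fun m => Cmul (Cconj (f m)) (x (m + s)%nat)).
Proof.
  intros H. unfold cinner, window.
  pose (F := fun m => Cmul (Cconj (f m)) (x (m + s)%nat)).
  transitivity (Csum n (fun i => if in_window s L i then F (i - s)%nat else C0)).
  - apply Csum_ext. intros i _. unfold in_window, F.
    destruct (Nat.leb_spec s i); destruct (Nat.ltb_spec i (s + L)); cbn [andb]; try ring_Cx.
    replace (i - s + s)%nat with i by lia. reflexivity.
  - rewrite Csum_window. f_equal. lia.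
Qed.

Lemma sqnorm_window n s L f : (s + L <= n)%nat ->
  sqnorm n (window s L f) = rsum L (fun m => Cabs2 (f m)).
Proof.
  intros H. unfold sqnorm, window.
  pose (F := fun m => Cabs2 (f m)).
  transitivity (rsum n (fun i => if in_window s L i then F (i - s)%nat else 0)).
  - apply rsum_ext. intros i _.
    destruct (in_window s L i); [reflexivity| unfold Cabs2; simpl; ring].
  - rewrite rsum_window. f_equal. lia.
Qed.

Lemma cinner_add_l n f g x : cinner n (fun i => Cadd (f i) (g i)) x = Cadd (cinner n f x) (cinner n g x).
Proof. unfold cinner. rewrite <- Csum_add. apply Csum_ext; intros. ring_Cx. Qed.
Lemma cinner_mul_l n c f x : cinner n (fun i => Cmul c (f i)) x = Cmul (Cconj c) (cinner n f x).
Proof. unfold cinner. rewrite <- Csum_mul_l. apply Csum_ext; intros. ring_Cx. Qed.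

Section TestVec.
Variables (n L h : nat) (t t' : R).
Hypothesis HL : (2 * h + L <= n)%nat.
Let E := Cexpi (INR h * t).
Let E' := Cexpi (INR h * t').
Let p1 := Cadd E E'.
Let p0 := Cmul E E'.
(* The filter (1 - e^{iht} T^h)(1 - e^{iht'} T^h), T the shift, applied to a window of the
   phase e^{imt}: it kills a(t) and a(t'), but pairs with a'(t) to L h (e^{iht} - e^{iht'}). *)
Definition window_phase : nat -> Cx := fun m => Cexpi (INR (m + h) * t).
Definition test_vec : nat -> Cx := fun i =>
  Cadd (window (2 * h) L window_phase i) (Cadd (Cmul (Copp (Cconj p1)) (window h L window_phase i)) (Cmul (Cconj p0) (window 0 L window_phase i))).

Lemma cinner_test_vec x : cinner n test_vec x =
  Csum L (fun m => Cmul (Cconj (window_phase m)) (Cadd (x (m + 2 * h)%nat) (Cadd (Cmul (Copp p1) (x (m + h)%nat)) (Cmul p0 (x (m + 0)%nat))))).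
Proof.
  unfold test_vec. rewrite cinner_add_l, cinner_add_l, !cinner_mul_l.
  rewrite !cinner_window by lia.
  rewrite <- !Csum_mul_l, <- !Csum_add. apply Csum_ext; intros. ring_Cx.
Qed.

Lemma test_vec_orth_steer t2 : (t2 = t \/ t2 = t') -> (0 < n)%nat ->
  cinner n test_vec (steer n t2) = C0.
Proof.
  intros Ht Hn. rewrite cinner_test_vec. apply Csum_zero. intros m Hm.
  unfold steer. rewrite Nat.add_0_r, !plus_INR, mult_INR. replace (INR 2) with 2 by (simpl; ring).
  replace ((INR m + 2 * INR h) * t2) with (INR m * t2 + INR h * t2 + INR h * t2) by ring.
  replace ((INR m + INR h) * t2) with (INR m * t2 + INR h * t2) by ring.
  rewrite !Cexpi_add. unfold p1, p0, E, E'.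
  destruct Ht as [-> | ->]; ring_Cx.
Qed.

Lemma cinner_test_vec_dvec Nn : (0 < n)%nat ->
  cinner n test_vec (dvec n Nn t) =
  Cscale (INR L * (/ INR Nn * / sqrt (INR n))) (Cmul (mkC 0 (INR h)) (Cadd E (Copp E'))).
Proof.
  intros Hn. rewrite cinner_test_vec.
  rewrite (Csum_ext L _ (fun _ => Cscale (/ INR Nn * / sqrt (INR n)) (Cmul (mkC 0 (INR h)) (Cadd E (Copp E'))))).
  - induction L; simpl Csum. simpl; ring_Cx. rewrite IHn0 by lia. rewrite S_INR. ring_Cx.
  - intros m Hm. unfold dvec, steer', window_phase. rewrite Nat.add_0_r, !plus_INR, mult_INR.
    replace (INR 2) with 2 by (simpl; ring).
    replace ((INR m + 2 * INR h) * t) with (INR m * t + INR h * t + INR h * t) by ring.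
    replace ((INR m + INR h) * t) with (INR m * t + INR h * t) by ring.
    rewrite !Cexpi_add. unfold p1, p0. fold E.
    set (Z := Cexpi (INR m * t)).
    transitivity (Cmul (Cmul (Cconj Z) Z) (Cmul (Cmul (Cconj E) E)
        (Cscale (/ INR Nn * / sqrt (INR n)) (Cmul (mkC 0 (INR h)) (Cadd E (Copp E')))))).
    + ring_Cx.
    + rewrite !Cmul_conj_self. unfold Z, E. rewrite !Cabs2_expi. ring_Cx.
Qed.

Lemma sqnorm_test_vec_le : sqnorm n test_vec <= 22 * INR L.
Proof.
  assert (Hg : rsum L (fun m => Cabs2 (window_phase m)) = INR L).
  { rewrite (rsum_ext L _ (fun _ => 1)). rewrite rsum_const; ring.
    intros; unfold window_phase; apply Cabs2_expi. }
  assert (H2 := sqnorm_window n (2 * h) L window_phase ltac:(lia)).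
  assert (H1 := sqnorm_window n h L window_phase ltac:(lia)).
  assert (H0 := sqnorm_window n 0 L window_phase ltac:(lia)).
  rewrite Hg in H0, H1, H2.
  assert (Hp1 : Cabs2 (Copp (Cconj p1)) <= 4).
  { rewrite Cabs2_opp, Cabs2_conj. unfold p1. eapply Rle_trans. apply Cabs2_add_le.
    unfold E, E'. rewrite !Cabs2_expi. lra. }
  assert (Hp0 : Cabs2 (Cconj p0) = 1).
  { rewrite Cabs2_conj. unfold p0. rewrite Cabs2_mul. unfold E, E'. rewrite !Cabs2_expi. ring. }
  unfold sqnorm, test_vec.
  eapply Rle_trans.
  - apply (rsum_le n _ (fun i => 2 * Cabs2 (window (2 * h) L window_phase i) + 16 * Cabs2 (window h L window_phase i) + 4 * Cabs2 (window 0 L window_phase i))).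
    intros i _. eapply Rle_trans. apply Cabs2_add_le.
    pose proof (Cabs2_add_le (Cmul (Copp (Cconj p1)) (window h L window_phase i)) (Cmul (Cconj p0) (window 0 L window_phase i))).
    rewrite !Cabs2_mul, Hp0 in H.
    pose proof (Cabs2_nonneg (window h L window_phase i)).
    assert (Cabs2 (Copp (Cconj p1)) * Cabs2 (window h L window_phase i) <= 4 * Cabs2 (window h L window_phase i)) by (apply Rmult_le_compat_r; lra).
    lra.
  - rewrite !rsum_add, !rsum_scal. unfold sqnorm in H0, H1, H2. rewrite H0, H1, H2. lra.
Qed.

End TestVec.

Lemma piform_ge_test n Nn h L t t' q : (0 < n)%nat -> (0 < Nn)%nat -> (2 * h + L <= n)%nat ->
  (0 < L)%nat -> 0 <= q ->
  (forall w, cinner n (steer n t) w = C0 -> cinner n (steer n t') w = C0 ->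
     Cabs2 (cinner n w (dvec n Nn t)) <= sqnorm n w * q) ->
  INR L * (/ INR Nn) ^ 2 * / INR n * INR h ^ 2 * (2 - 2 * cos (INR h * t - INR h * t')) / 22 <= q.
Proof.
  intros Hn HN HL HL0 Hq H.
  set (w := test_vec L h t t').
  assert (P1 : cinner n (steer n t) w = C0).
  { rewrite cinner_conj. unfold w. rewrite test_vec_orth_steer by auto. ring_Cx. }
  assert (P2 : cinner n (steer n t') w = C0).
  { rewrite cinner_conj. unfold w. rewrite test_vec_orth_steer by auto. ring_Cx. }
  specialize (H w P1 P2). unfold w in H. rewrite cinner_test_vec_dvec in H by auto.
  rewrite Cabs2_scale, Cabs2_mul, Cabs2_expi_diff in H.
  replace (Cabs2 {| Re := 0; Im := INR h |}) with (INR h ^ 2) in H by (unfold Cabs2; simpl; ring).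
  pose proof (sqnorm_test_vec_le n L h t t' HL) as HW.
  assert (HLp : 0 < INR L) by (apply lt_0_INR; auto).
  assert (Hs : (/ sqrt (INR n)) ^ 2 = / INR n).
  { replace ((/ sqrt (INR n)) ^ 2) with (/ sqrt (INR n) * / sqrt (INR n)) by ring.
    apply inv_sqrt_sq; auto. }
  replace ((INR L * (/ INR Nn * / sqrt (INR n))) ^ 2) with (INR L ^ 2 * (/ INR Nn) ^ 2 * (/ sqrt (INR n)) ^ 2) in H by ring.
  rewrite Hs in H.
  assert (Hb : sqnorm n (test_vec L h t t') * q <= 22 * INR L * q) by (apply Rmult_le_compat_r; auto).
  apply Rmult_le_reg_l with (22 * INR L). lra.
  replace (22 * INR L * (INR L * (/ INR Nn) ^ 2 * / INR n * INR h ^ 2 * (2 - 2 * cos (INR h * t - INR h * t')) / 22))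
    with (INR L ^ 2 * (/ INR Nn) ^ 2 * / INR n * (INR h ^ 2 * (2 - 2 * cos (INR h * t - INR h * t')))) by (field; repeat split; apply not_0_INR; lia).
  lra.
Qed.

(* 22 bounds |test_vec|^2 / L; the factors 1/2 and 1/(2q) are the lower bounds of L/n and h/N. *)
Definition kappa (alpha q : R) : R := 1 / 2 * (1 / (2 * q)) ^ 2 * (2 - 2 * cos (alpha / (2 * q))) / 22.

Lemma kappa_le (Nr n h L alpha qr : R) : 0 < Nr -> 0 < n -> 1 <= qr -> h * qr <= Nr ->
  Nr < (h + 1) * qr ->
  2 * qr <= Nr -> n / 2 <= L -> alpha / qr < PI -> 0 < alpha ->
  kappa alpha qr <=
  L * (/ Nr) ^ 2 * / n * h ^ 2 * (2 - 2 * cos (h * alpha / Nr)) / 22.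
Proof.
  intros HN Hn Hq H1 H2 H3 HL Hpi Ha. unfold kappa.
  assert (HPI := PI_RGT_0).
  set (y := h / Nr).
  assert (Hy1 : 1 / (2 * qr) <= y).
  { unfold y. apply div_le_cross; try lra; nra. }
  assert (Hy2 : y <= 1 / qr).
  { unfold y. apply div_le_cross; try lra. }
  assert (Hy0 : 0 < y) by (assert (0 < 1 / (2 * qr)) by (apply Rdiv_lt_0_compat; lra); lra).
  assert (Hc1 : cos (h * alpha / Nr) <= cos (alpha / (2 * qr))).
  { replace (h * alpha / Nr) with (y * alpha) by (unfold y; field; lra).
    assert (alpha / (2 * qr) <= y * alpha).
    { replace (alpha / (2 * qr)) with (1 / (2 * qr) * alpha) by (field; lra).
      apply Rmult_le_compat_r; lra. }
    assert (y * alpha <= alpha / qr).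
    { replace (alpha / qr) with (1 / qr * alpha) by (field; lra). apply Rmult_le_compat_r; lra. }
    assert (0 < alpha / (2 * qr)) by (apply Rdiv_lt_0_compat; lra).
    destruct (Req_dec (alpha / (2 * qr)) (y * alpha)) as [E|E]. rewrite E; lra.
    left. apply cos_decreasing_1; lra. }
  assert (Hc0 : cos (alpha / (2 * qr)) <= 1) by apply COS_bound.
  replace (L * (/ Nr) ^ 2 * / n * h ^ 2 * (2 - 2 * cos (h * alpha / Nr)) / 22)
    with (L / n * y ^ 2 * (2 - 2 * cos (h * alpha / Nr)) / 22) by (unfold y; field; lra).
  assert (HLn : 1 / 2 <= L / n) by (apply div_le_cross; lra).
  assert (Hyy : (1 / (2 * qr)) ^ 2 <= y ^ 2).
  { assert (0 < 1 / (2 * qr)) by (apply Rdiv_lt_0_compat; lra). nra. }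
  assert (0 <= 2 - 2 * cos (alpha / (2 * qr))) by lra.
  assert (0 <= (1 / (2 * qr)) ^ 2) by nra.
  apply Rmult_le_compat_r. lra.
  apply Rmult_le_compat; try nra.
Qed.

Lemma kappa_pos alpha q : 0 < alpha -> 1 <= q -> alpha / q < PI -> 0 < kappa alpha q.
Proof.
  intros Ha Hq Hpi. unfold kappa. pose proof PI_RGT_0.
  assert (cos (alpha / (2 * q)) < 1).
  { rewrite <- cos_0. apply cos_decreasing_1; try lra.
    - left. apply Rdiv_lt_0_compat; lra.
    - assert (alpha / (2 * q) < alpha / q)
        by (apply Rmult_lt_compat_l; [lra | apply Rinv_lt_contravar; nra]). lra.
    - apply Rdiv_lt_0_compat; lra. }
  assert (0 < 1 / (2 * q)) by (apply Rdiv_lt_0_compat; lra).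
  apply Rdiv_lt_0_compat; [|lra]. apply Rmult_lt_0_compat; [apply Rmult_lt_0_compat; nra | lra].
Qed.

Lemma nat_unbounded (r : R) : exists n : nat, r < INR n.
Proof.
  destruct (archimed r) as [H1 _].
  destruct (Z_le_gt_dec 0 (up r)) as [Hz|Hz].
  - exists (Z.to_nat (up r)). rewrite INR_IZR_INZ, Z2Nat.id; auto.
  - exists 0%nat. simpl. apply Z.gt_lt in Hz. apply IZR_lt in Hz. lra.
Qed.

Lemma INR_div_bounds N q : (0 < q)%nat ->
  INR (N / q) * INR q <= INR N /\ INR N < (INR (N / q) + 1) * INR q.
Proof.
  intros Hq. pose proof (Nat.div_mod N q ltac:(lia)) as E.
  pose proof (Nat.mod_upper_bound N q ltac:(lia)) as B.
  split.
  - rewrite <- mult_INR. apply le_INR. nia.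
  - assert (INR (N mod q) < INR q) by (apply lt_INR; auto).
    rewrite E at 1. rewrite plus_INR, mult_INR. nra.
Qed.

Lemma cv_const (r : R) : Un_cv (fun _ => r) r.
Proof. intros e He. exists 0%nat. intros. unfold Rdist. rewrite Rminus_diag, Rabs_R0. auto. Qed.

Lemma cv_eventually_ext (u v : nat -> R) l N0 : (forall N, (N0 <= N)%nat -> u N = v N) ->
  Un_cv u l -> Un_cv v l.
Proof.
  intros He Hu e Hpos. destruct (Hu e Hpos) as [N1 HN1]. exists (Nat.max N0 N1). intros N HN.
  rewrite <- He by lia. apply HN1. lia.
Qed.

Lemma cv_squeeze (lo x hi : nat -> R) l N0 :
  (forall N, (N0 <= N)%nat -> lo N <= x N <= hi N) -> Un_cv lo l -> Un_cv hi l -> Un_cv x l.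
Proof.
  intros H Hl Hh e He. destruct (Hl e He) as [N1 H1]. destruct (Hh e He) as [N2 H2].
  exists (Nat.max N0 (Nat.max N1 N2)). intros N HN.
  specialize (H N ltac:(lia)). specialize (H1 N ltac:(lia)). specialize (H2 N ltac:(lia)).
  unfold Rdist in *. apply Rabs_def2 in H1. apply Rabs_def2 in H2. apply Rabs_def1; lra.
Qed.

Lemma cv_squeeze0 (u ub : nat -> R) N0 : (forall N, (N0 <= N)%nat -> 0 <= u N <= ub N) ->
  Un_cv ub 0 -> Un_cv u 0.
Proof. intros H Hub. apply (cv_squeeze (fun _ => 0) u ub 0 N0); auto. apply cv_const. Qed.

Lemma cv_eventually_gt (u : nat -> R) l a : Un_cv u l -> a < l ->
  exists N0, forall N, (N0 <= N)%nat -> a < u N.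
Proof.
  intros Hu Ha. destruct (Hu (l - a) ltac:(lra)) as [N0 H]. exists N0. intros N HN.
  specialize (H N HN). unfold Rdist in H. apply Rabs_def2 in H. lra.
Qed.

Lemma cv_eventually_lt (u : nat -> R) l a : Un_cv u l -> l < a ->
  exists N0, forall N, (N0 <= N)%nat -> u N < a.
Proof.
  intros Hu Ha. destruct (Hu (a - l) ltac:(lra)) as [N0 H]. exists N0. intros N HN.
  specialize (H N HN). unfold Rdist in H. apply Rabs_def2 in H. lra.
Qed.

Lemma cv_inv (u : nat -> R) l : Un_cv u l -> l <> 0 -> Un_cv (fun N => / u N) (/ l).
Proof.
  intros Hu Hl. apply (continuity_seq (fun x => / x) u l); auto.
  apply (continuity_pt_inv id l); auto. apply derivable_continuous_pt, derivable_pt_id.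
Qed.

Lemma cv_sqrt0 (u : nat -> R) : Un_cv u 0 -> Un_cv (fun N => sqrt (u N)) 0.
Proof.
  intros Hu. rewrite <- sqrt_0. apply (continuity_seq sqrt u 0); auto. apply continuity_pt_sqrt.
  lra.
Qed.

Lemma cv_scal (u : nat -> R) l r : Un_cv u l -> Un_cv (fun N => r * u N) (r * l).
Proof. intros. apply CV_mult; auto. apply cv_const. Qed.

Lemma cv_inv_INR : Un_cv (fun N => / INR N) 0.
Proof.
  intros e He. destruct (nat_unbounded (/ e)) as [N0 HN0]. exists (S N0). intros N HN.
  unfold Rdist. rewrite Rminus_0_r.
  assert (HNp : 0 < INR N) by (apply lt_0_INR; lia).
  assert (INR N0 < INR N) by (apply lt_INR; lia).
  rewrite Rabs_right by (left; apply Rinv_0_lt_compat; auto).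
  assert (H1 : / e < INR N) by lra.
  assert (Hie : 0 < / e) by (apply Rinv_0_lt_compat; auto).
  apply Rinv_lt_contravar in H1; [| nra]. rewrite Rinv_inv in H1. exact H1.
Qed.

Lemma cv_rsum K (f : nat -> nat -> R) (l : nat -> R) :
  (forall i, (i < K)%nat -> Un_cv (f i) (l i)) -> Un_cv (fun N => rsum K (fun i => f i N)) (rsum K l).
Proof.
  induction K; intros H.
  - simpl. apply cv_const.
  - simpl. apply CV_plus. apply IHK; intros; apply H; lia. apply H; lia.
Qed.

Lemma eventually_forall_lt K (P : nat -> nat -> Prop) :
  (forall i, (i < K)%nat -> exists N0, forall N, (N0 <= N)%nat -> P i N) ->
  exists N0, forall N, (N0 <= N)%nat -> forall i, (i < K)%nat -> P i N.
Proof.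
  induction K; intros H.
  - exists 0%nat. intros; lia.
  - destruct IHK as [N1 H1]. intros; apply H; lia.
    destruct (H K ltac:(lia)) as [N2 H2]. exists (Nat.max N1 N2). intros N HN i Hi.
    destruct (Nat.eq_dec i K) as [->|]. apply H2; lia. apply H1; lia.
Qed.

Lemma sin_div_cv1 (t : nat -> R) N0 : Un_cv t 0 -> (forall N, (N0 <= N)%nat -> t N <> 0) ->
  Un_cv (fun N => sin (t N) / t N) 1.
Proof.
  intros Ht Hnz e He. destruct (derivable_pt_lim_sin_0 e He) as [del Hdel].
  destruct (Ht del (cond_pos del)) as [N1 HN1]. exists (Nat.max N0 N1). intros N HN.
  specialize (HN1 N ltac:(lia)). unfold Rdist in *. rewrite Rminus_0_r in HN1.
  specialize (Hdel (t N) (Hnz N ltac:(lia)) HN1). rewrite Rplus_0_l, sin_0, Rminus_0_r in Hdel.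
  exact Hdel.
Qed.

Lemma Cabs2_sub_cv0 (G : nat -> Cx) (z : Cx) : Cconv G z ->
  Un_cv (fun N => Cabs2 (Cadd (G N) (Copp z))) 0.
Proof.
  intros [H1 H2]. unfold Cabs2; simpl.
  replace 0 with ((Re z - Re z) * ((Re z - Re z) * 1) + (Im z - Im z) * ((Im z - Im z) * 1)) by ring.
  assert (A1 : Un_cv (fun N => Re (G N) + - Re z) (Re z - Re z)) by (apply CV_minus; auto; apply cv_const).
  assert (A2 : Un_cv (fun N => Im (G N) + - Im z) (Im z - Im z)) by (apply CV_minus; auto; apply cv_const).
  apply CV_plus; apply CV_mult; auto; (apply CV_mult; [auto| apply cv_const]).
Qed.

Lemma liminf_pos_of_cv (x : nat -> R) l : Un_cv x l -> 0 < l -> liminf_pos x.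
Proof.
  intros Hx Hl. destruct (cv_eventually_gt x l (l / 2) Hx ltac:(lra)) as [N0 H].
  exists (l / 2). split; [lra|]. exists N0. intros. left. auto.
Qed.

Lemma sq_one_sub_cos_cv alpha : 0 < alpha ->
  Un_cv (fun N => INR N ^ 2 * (2 - 2 * cos (alpha / INR N))) (alpha ^ 2).
Proof.
  intros Ha. set (t := fun N => alpha / 2 * / INR N).
  assert (Ht : Un_cv t 0) by (unfold t; replace 0 with (alpha / 2 * 0) by ring; apply cv_scal, cv_inv_INR).
  assert (Htnz : forall N, (1 <= N)%nat -> t N <> 0).
  { intros N HN. unfold t. assert (0 < INR N) by (apply lt_0_INR; lia).
    apply Rmult_integral_contrapositive; split; [lra | apply Rinv_neq_0_compat; lra]. }
  pose proof (sin_div_cv1 t 1 Ht Htnz) as Hsin.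
  apply (cv_eventually_ext (fun N => alpha ^ 2 * ((sin (t N) / t N) * (sin (t N) / t N)))) with (N0 := 1%nat).
  - intros N HN. assert (0 < INR N) by (apply lt_0_INR; lia).
    replace (alpha / INR N) with (2 * t N) by (unfold t; field; lra).
    rewrite cos_2a_sin. unfold t. field. split; lra.
  - assert (L : Un_cv (fun N => alpha ^ 2 * (sin (t N) / t N * (sin (t N) / t N))) (alpha ^ 2 * (1 * 1)))
      by (apply cv_scal, CV_mult; auto).
    rewrite !Rmult_1_r in L. exact L.
Qed.

Definition Gram_lower (Nn K : nat) (S : nat -> nat -> Cx) (mG : R) : Prop :=
  0 < mG /\ forall w, mG * sqnorm K w <= Re (cinner K w (matvec K (Gram Nn K S) w)).

Lemma adjS_inj_of_Gram_lower Nn K S mG : Gram_lower Nn K S mG ->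
  forall y : nat -> Cx,
  (forall l, (l < Nn)%nat -> Csum K (fun k => Cmul (Cconj (S k l)) (y k)) = C0) ->
  forall k, (k < K)%nat -> y k = C0.
Proof.
  intros [HmG Hlow] y Hy. apply sqnorm_zero.
  assert (Hz : forall i, (i < K)%nat -> matvec K (Gram Nn K S) y i = C0).
  { intros i Hi. unfold matvec, Gram.
    transitivity (Cscale (/ INR Nn) (Csum Nn (fun l => Cmul (S i l) (Csum K (fun j => Cmul (Cconj (S j l)) (y j)))))).
    - rewrite <- Csum_scale.
      rewrite (Csum_ext K _ (fun j => Csum Nn (fun l => Cscale (/ INR Nn) (Cmul (S i l) (Cmul (Cconj (S j l)) (y j)))))).
      + rewrite Csum_swap. apply Csum_ext; intros l _. rewrite <- Csum_mul_l, Csum_scale.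
        reflexivity.
      + intros j _. rewrite Cmul_scale_l, <- Csum_mul_r, <- Csum_scale.
        apply Csum_ext; intros; ring_Cx.
    - rewrite (Csum_zero Nn). ring_Cx. intros l Hl. rewrite Hy by auto. ring_Cx. }
  assert (E : cinner K y (matvec K (Gram Nn K S) y) = C0).
  { unfold cinner. apply Csum_zero. intros i Hi. rewrite Hz by auto. ring_Cx. }
  specialize (Hlow y). rewrite E in Hlow. simpl in Hlow. pose proof (sqnorm_nonneg K y).
  nra.
Qed.

Lemma cinner_matvec_herm K H x y : (forall i j, H i j = Cconj (H j i)) ->
  cinner K x (matvec K H y) = cinner K (matvec K H x) y.
Proof.
  intros Hh. unfold cinner, matvec.
  rewrite (Csum_ext K (fun i => Cmul (Cconj (x i)) (Csum K (fun j => Cmul (H i j) (y j))))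
     (fun i => Csum K (fun j => Cmul (Cmul (H i j) (Cconj (x i))) (y j)))).
  - rewrite Csum_swap. apply Csum_ext; intros j _. rewrite Csum_conj, <- Csum_mul_r.
    apply Csum_ext; intros i _. rewrite (Hh j i). ring_Cx.
  - intros i _. rewrite <- Csum_mul_l. apply Csum_ext; intros; ring_Cx.
Qed.

Lemma Gram_herm Nn K S : forall i j, Gram Nn K S i j = Cconj (Gram Nn K S j i).
Proof.
  intros i j. unfold Gram. rewrite Cconj_scale, Csum_conj. f_equal. apply Csum_ext; intros; ring_Cx.
Qed.

Lemma cinner_scale_l n r x y : cinner n (fun i => Cscale r (x i)) y = Cscale r (cinner n x y).
Proof. unfold cinner. rewrite <- Csum_scale. apply Csum_ext; intros; ring_Cx. Qed.

Lemma quadform_ge_of_eigs K (H : nat -> nat -> Cx) (v : nat -> nat -> Cx) (mu : nat -> R) m :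
  orthonormal K K v -> (forall k, (k < K)%nat -> is_eigvec K H (mu k) (v k)) ->
  (forall i j, H i j = Cconj (H j i)) -> (forall k, (k < K)%nat -> m <= mu k) ->
  forall w, m * sqnorm K w <= Re (cinner K w (matvec K H w)).
Proof.
  intros Hon Heig Hh Hm w.
  rewrite (cinner_parseval K v Hon w (matvec K H w)), Csum_Re.
  rewrite (sqnorm_parseval K v Hon w), <- rsum_scal. apply rsum_le. intros k Hk.
  rewrite cinner_matvec_herm by auto.
  rewrite (cinner_ext K (matvec K H (v k)) w (fun i => Cscale (mu k) (v k i)) w); [| intros; apply Heig; auto | auto].
  rewrite cinner_scale_l.
  replace (Re (Cmul (Cconj (cinner K (v k) w)) (Cscale (mu k) (cinner K (v k) w))))
    with (mu k * Re (Cmul (Cconj (cinner K (v k) w)) (cinner K (v k) w))) by (simpl; ring).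
  rewrite Cmul_conj_self. simpl. apply Rmult_le_compat_r. apply Cabs2_nonneg. auto.
Qed.

Lemma cinner_matvec_near_id_const K H eps w : 0 <= eps ->
  (forall i j, (i < K)%nat -> (j < K)%nat -> Cabs2 (Cadd (H i j) (Copp (kron i j))) <= eps ^ 2) ->
  Rabs (Re (cinner K w (matvec K H w)) - sqnorm K w) <= INR K * eps * sqnorm K w.
Proof.
  intros He Hb. eapply Rle_trans. apply (cinner_matvec_near_id K H (fun _ _ => eps) w).
  intros; split; auto.
  right.
  rewrite (rsum_ext K _ (fun i => INR K * (eps / 2) * Cabs2 (w i) + eps / 2 * sqnorm K w)).
  - rewrite rsum_add, rsum_scal, rsum_const. unfold sqnorm. field.
  - intros i _. transitivity (rsum K (fun j => eps / 2 * Cabs2 (w i) + eps / 2 * Cabs2 (w j))).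
    + apply rsum_ext; intros; field.
    + rewrite rsum_add, rsum_const, rsum_scal. unfold sqnorm. ring.
Qed.

Lemma Cadd_opp0 z : Cadd z (Copp C0) = z.
Proof. ring_Cx. Qed.

Lemma cinner_matvec_near_id_2 H r w : 0 <= r -> H 0%nat 0%nat = C1 -> H 1%nat 1%nat = C1 ->
  Cabs2 (H 0%nat 1%nat) <= r ^ 2 -> Cabs2 (H 1%nat 0%nat) <= r ^ 2 ->
  Rabs (Re (cinner 2 w (matvec 2 H w)) - sqnorm 2 w) <= r * sqnorm 2 w.
Proof.
  intros Hr H00 H11 H01 H10.
  eapply Rle_trans. apply (cinner_matvec_near_id 2 H (fun i j => if Nat.eqb i j then 0 else r) w).
  - intros i j Hi Hj. destruct i as [|[|i]]; destruct j as [|[|j]]; try lia; unfold kron; simpl.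
    + rewrite H00. split; [lra|]. unfold Cabs2; simpl. lra.
    + rewrite Cadd_opp0. split; auto.
    + rewrite Cadd_opp0. split; auto.
    + rewrite H11. split; [lra|]. unfold Cabs2; simpl. lra.
  - right. unfold sqnorm. simpl. field.
Qed.

Definition gram_defect (n : nat) (a : nat -> nat -> Cx) (k l : nat) : R :=
  Cabs2 (Cadd (frame_gram n a k l) (Copp (kron k l))).

Definition frame_defect (n K : nat) (a : nat -> nat -> Cx) : R :=
  sqrt (rsum K (fun k => rsum K (fun l => gram_defect n a k l))).

Lemma gram_defect_le n K a k l : (k < K)%nat -> (l < K)%nat ->
  gram_defect n a k l <= frame_defect n K a ^ 2.
Proof.
  intros Hk Hl. assert (H0 : forall k l, 0 <= gram_defect n a k l) by (intros; apply Cabs2_nonneg).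
  unfold frame_defect. rewrite pow2_sqrt.
  - eapply Rle_trans; [| apply (rsum_term_le K (fun k' => rsum K (fun l' => gram_defect n a k' l')) k)]; auto.
    + apply (rsum_term_le K (fun l' => gram_defect n a k l') l); auto.
    + intros; apply rsum_nonneg; auto.
  - apply rsum_nonneg; intros; apply rsum_nonneg; auto.
Qed.

Lemma synthesis_near_isometry n K a c :
  Rabs (sqnorm n (synthesis K a c) - sqnorm K c) <= INR K * frame_defect n K a * sqnorm K c.
Proof.
  rewrite sqnorm_synthesis. apply cinner_matvec_near_id_const; [apply sqrt_pos|].
  intros i j Hi Hj. apply (gram_defect_le n K a i j Hi Hj).
Qed.

Definition spectral_decomp (n Nn K : nat) (th : nat -> R) (S : nat -> nat -> Cx)
    (u : nat -> nat -> Cx) (lam : nat -> R) : Prop :=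
  orthonormal n n u /\
  (forall j, (j < n)%nat -> is_eigvec n (BBs n Nn K th S) (lam j) (u j)) /\
  (forall j, (j + 1 < K)%nat -> lam (j + 1)%nat <= lam j) /\
  (forall j, (K <= j)%nat -> (j < n)%nat -> lam j = 0).

Definition near_isometric (n K : nat) (a : nat -> nat -> Cx) (rho : R) : Prop :=
  0 <= rho /\ rho < 1 /\ INR (K - 1) * (1 + rho) < INR K /\
  forall c, Rabs (sqnorm n (synthesis K a c) - sqnorm K c) <= rho * sqnorm K c.

Lemma near_isometric_bounds n K a rho : near_isometric n K a rho -> forall c,
  (1 - rho) * sqnorm K c <= sqnorm n (synthesis K a c) <= (1 + rho) * sqnorm K c.
Proof. intros [_ [_ [_ Hr]]] c. specialize (Hr c). apply Rabs_le_inv in Hr. lra. Qed.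

Lemma piform_le_steer n Nn K th S u lam mG k x :
  spectral_decomp n Nn K th S u lam -> (K < n)%nat -> (0 < Nn)%nat -> Gram_lower Nn K S mG ->
  (k < K)%nat -> piform n K u x <= sqnorm n x - Cabs2 (cinner n (steers n th k) x).
Proof.
  intros [Hon [Heig [_ Hzero]]] HKn HN HG Hk. unfold piform. rewrite Re_qform_PiMat.
  pose proof (steer_energy_le_signal n Nn K th S u lam Hon Heig Hzero HKn HN
    (adjS_inj_of_Gram_lower Nn K S mG HG) (fun k _ => sqnorm_steer n (th k) ltac:(lia)) k x Hk).
  lra.
Qed.

Lemma piform_ge_analysis n Nn K th S u lam mG rho x :
  spectral_decomp n Nn K th S u lam -> (K < n)%nat -> (0 < Nn)%nat -> Gram_lower Nn K S mG ->
  near_isometric n K (steers n th) rho ->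
  sqnorm n x - sqnorm K (analysis n (steers n th) x) / (1 - rho) <= piform n K u x.
Proof.
  intros [Hon [Heig [Hord Hzero]]] HKn HN HG Hrho.
  pose proof (near_isometric_bounds _ _ _ _ Hrho) as Hb. destruct Hrho as [Hr0 [Hr1 [HrK _]]].
  unfold piform. rewrite Re_qform_PiMat.
  pose proof (signal_energy_le_analysis n Nn K th S u lam Hon Heig Hord Hzero HKn HN
    (adjS_inj_of_Gram_lower Nn K S mG HG) (1 + rho) ltac:(lra) (fun c => proj2 (Hb c)) HrK
    (fun k _ => sqnorm_steer n (th k) ltac:(lia)) (1 - rho) x ltac:(lra) (fun c => proj1 (Hb c))).
  lra.
Qed.

Lemma piform_ge_orth_steers n Nn K th S u lam mG rho w x :
  spectral_decomp n Nn K th S u lam -> (K < n)%nat -> (0 < Nn)%nat -> Gram_lower Nn K S mG ->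
  near_isometric n K (steers n th) rho ->
  (forall k, (k < K)%nat -> cinner n (steers n th k) w = C0) ->
  Cabs2 (cinner n w x) <= sqnorm n w * piform n K u x.
Proof.
  intros [Hon [Heig [Hord Hzero]]] HKn HN HG Hrho Hw.
  pose proof (near_isometric_bounds _ _ _ _ Hrho) as Hb. destruct Hrho as [Hr0 [Hr1 [HrK _]]].
  exact (piform_test_vector n Nn K th S u lam Hon Heig Hord Hzero HKn HN
    (adjS_inj_of_Gram_lower Nn K S mG HG) (1 + rho) ltac:(lra) (fun c => proj2 (Hb c)) HrK
    (fun k _ => sqnorm_steer n (th k) ltac:(lia)) w x Hw).
Qed.

Lemma weight_noise_lower s2 sig lam Lmax : 0 < s2 -> 0 <= sig -> sig < lam -> lam <= Lmax ->
  s2 / (4 * Lmax) <= s2 * (lam + s2) / (4 * (lam ^ 2 - sig ^ 2)).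
Proof.
  intros. assert (0 < lam ^ 2 - sig ^ 2) by nra.
  assert (lam * lam <= lam * Lmax) by (apply Rmult_le_compat_l; lra).
  assert (0 <= s2 * Lmax) by nra.
  apply div_le_cross; try nra.
Qed.

Lemma vtheta_bounds c s2 K lamw Lmax : 0 < c -> 0 < s2 ->
  (forall j, (j < K)%nat -> s2 * sqrt c < lamw j /\ lamw j <= Lmax) ->
  (forall j l, 0 <= vtheta c s2 K lamw j l) /\
  (forall j l, (j < K)%nat -> (K <= l)%nat -> s2 / (4 * Lmax) <= vtheta c s2 K lamw j l).
Proof.
  intros Hc Hs H.
  set (sig := s2 * sqrt c) in *.
  assert (Hsig : 0 < sig) by (unfold sig; apply Rmult_lt_0_compat; auto; apply sqrt_lt_R0; auto).
  assert (Hsc : s2 ^ 2 * c = sig ^ 2) by (unfold sig; replace ((s2 * sqrt c) ^ 2) with (s2 ^ 2 * (sqrt c * sqrt c)) by ring; rewrite sqrt_sqrt; lra).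
  assert (HL : forall j, (j < K)%nat -> 0 < Lmax) by (intros j Hj; destruct (H j Hj); lra).
  split.
  - intros j l. unfold vtheta. rewrite Hsc.
    destruct (Nat.ltb_spec j K); destruct (Nat.ltb_spec l K).
    + destruct (H j) as [A1 _]; auto. destruct (H l) as [A2 _]; auto. fold sig in A1, A2.
      assert (0 < lamw j ^ 2 - sig ^ 2) by nra. assert (0 < lamw l ^ 2 - sig ^ 2) by nra.
      assert (0 < lamw j * lamw l - sig ^ 2) by nra.
      apply Rmult_le_pos.
      * apply Rmult_le_pos; [apply Rmult_le_pos|]; nra.
      * left. apply Rinv_0_lt_compat. apply Rmult_lt_0_compat; [apply Rmult_lt_0_compat|]; nra.
    + destruct (H j) as [A1 _]; auto. fold sig in A1. assert (0 < lamw j ^ 2 - sig ^ 2) by nra.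
      apply Rmult_le_pos. nra. left. apply Rinv_0_lt_compat. lra.
    + destruct (H l) as [A1 _]; auto. fold sig in A1. assert (0 < lamw l ^ 2 - sig ^ 2) by nra.
      apply Rmult_le_pos. nra. left. apply Rinv_0_lt_compat. lra.
    + lra.
  - intros j l Hj Hl. unfold vtheta. rewrite Hsc.
    replace (j <? K)%nat with true by (symmetry; apply Nat.ltb_lt; auto).
    replace (l <? K)%nat with false by (symmetry; apply Nat.ltb_ge; auto).
    destruct (H j Hj). apply weight_noise_lower; auto; lra.
Qed.

Lemma liminf_gamma_of_piform c s2 K M th S u lamN lamw Lmax x k :
  0 < c -> 0 < s2 -> (k < K)%nat ->
  (forall j, (j < K)%nat -> s2 * sqrt c < lamw j <= Lmax) ->
  (forall N, spectral_decomp (M N) N K (th N) (S N) (u N) (lamN N)) ->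
  (forall N, (K < M N)%nat) ->
  (exists mG N0, forall N, (N0 <= N)%nat -> Gram_lower N K (S N) mG) ->
  liminf_pos (fun N => piform (M N) K (u N) (x N)) ->
  liminf_pos (fun N => gammaN (M N) K c s2 lamw (u N) (x N) (steers (M N) (th N) k)).
Proof.
  intros Hc Hs2 Hk Hlamw Hu HM [mG [N0 HG]] [e [He [N1 HN1]]].
  destruct (vtheta_bounds c s2 K lamw Lmax Hc Hs2 Hlamw) as [Hv0 Hv1].
  assert (HL : 0 < Lmax).
  { destruct (Hlamw k Hk). pose proof (sqrt_lt_R0 c Hc). nra. }
  set (wmin := s2 / (4 * Lmax)).
  assert (Hwm : 0 < wmin) by (unfold wmin; apply Rdiv_lt_0_compat; lra).
  exists (wmin * e). split; [nra|]. exists (Nat.max N0 (Nat.max N1 1)). intros N HN.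
  destruct (Hu N) as [Hon [Heig [_ Hzero]]].
  pose proof (gamma_ge_piform (M N) N K (th N) (S N) (u N) (lamN N) Hon Heig Hzero (HM N)
    ltac:(lia) (adjS_inj_of_Gram_lower N K (S N) mG (HG N ltac:(lia)))
    (fun k _ => sqnorm_steer (M N) (th N k) ltac:(pose proof (HM N); lia))
    c s2 lamw wmin (x N) k Hk ltac:(lra) Hv0 Hv1).
  pose proof (HN1 N ltac:(lia)). nra.
Qed.

Section ArraySize.
Variables (c : R) (M : nat -> nat).
Hypothesis Hc : 0 < c.
Hypothesis HM0 : forall N, (0 < M N)%nat.
Hypothesis HMc : Un_cv (fun N => INR (M N) / INR N) c.

Lemma cv_inv_M : Un_cv (fun N => / INR (M N)) 0.
Proof.
  destruct (cv_eventually_gt _ c (c / 2) HMc ltac:(lra)) as [N0 H0].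
  apply (cv_eventually_ext (fun N => / INR N * / (INR (M N) / INR N))) with (N0 := Nat.max N0 1).
  - intros N HN. assert (0 < INR N) by (apply lt_0_INR; lia).
    assert (0 < INR (M N)) by (apply lt_0_INR, HM0). field. lra.
  - replace 0 with (0 * / c) by ring. apply CV_mult. apply cv_inv_INR. apply cv_inv; auto. lra.
Qed.

Lemma sqnorm_dvec_cv (t : nat -> R) : Un_cv (fun N => sqnorm (M N) (dvec (M N) N (t N))) (c ^ 2 / 3).
Proof.
  apply (cv_eventually_ext (fun N => (INR (M N) / INR N - / INR N) * (2 * (INR (M N) / INR N) - / INR N) / 6))
    with (N0 := 1%nat).
  - intros N HN. rewrite sqnorm_dvec by (apply HM0 || lia).
    assert (0 < INR N) by (apply lt_0_INR; lia).
    field. lra.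
  - replace (c ^ 2 / 3) with ((c - 0) * (2 * c - 0) * / 6) by field.
    apply CV_mult; [|apply cv_const]. apply CV_mult; apply CV_minus; auto using cv_inv_INR.
    apply cv_scal; auto.
Qed.

Lemma steer_dvec_cv (t : nat -> R) :
  Un_cv (fun N => Cabs2 (cinner (M N) (steer (M N) (t N)) (dvec (M N) N (t N)))) (c ^ 2 / 4).
Proof.
  apply (cv_eventually_ext (fun N => (INR (M N) / INR N - / INR N) * / 2 * ((INR (M N) / INR N - / INR N) * / 2)))
    with (N0 := 1%nat).
  - intros N HN. rewrite cinner_steer_dvec by apply HM0.
    rewrite Rminus_diag, mexpsum_0, Cabs2_scale.
    unfold Cabs2; simpl. assert (0 < INR N) by (apply lt_0_INR; lia).
    assert (0 < INR (M N)) by (apply lt_0_INR, HM0). field. lra.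
  - replace (c ^ 2 / 4) with ((c - 0) * / 2 * ((c - 0) * / 2)) by field.
    assert (Hx : Un_cv (fun N => (INR (M N) / INR N - / INR N) * / 2) ((c - 0) * / 2)).
    { apply CV_mult; [| apply cv_const]. apply CV_minus; auto using cv_inv_INR. }
    apply CV_mult; auto.
Qed.

End ArraySize.

Section FixedAngles.
Variables (c s2 : R) (K : nat) (M : nat -> nat) (th : nat -> nat -> R)
  (S : nat -> nat -> nat -> Cx) (u : nat -> nat -> nat -> Cx) (lamN : nat -> nat -> R)
  (th0 : nat -> R) (mu : nat -> nat -> R) (v : nat -> nat -> nat -> Cx) (lam : nat -> R).
Hypothesis Hc : 0 < c.
Hypothesis Hs2 : 0 < s2.
Hypothesis HK : (1 <= K)%nat.
Hypothesis HM : forall N, (K < M N)%nat.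
Hypothesis HMc : Un_cv (fun N => INR (M N) / INR N) c.
Hypothesis Hu : forall N, spectral_decomp (M N) N K (th N) (S N) (u N) (lamN N).
Hypothesis Hth : forall N k, th N k = th0 k.
Hypothesis Hdist : forall k l, (k < K)%nat -> (l < K)%nat -> k <> l ->
  forall z : Z, th0 k - th0 l <> 2 * PI * IZR z.
Hypothesis Hv : forall N, orthonormal K K (v N) /\
  forall k, (k < K)%nat -> is_eigvec K (Gram N K (S N)) (mu k N) (v N k).
Hypothesis Hmu : forall k, (k < K)%nat -> Un_cv (mu k) (lam k).
Hypothesis Hdec : forall k, (k + 1 < K)%nat -> lam (k + 1)%nat < lam k.
Hypothesis Hlast : s2 * sqrt c < lam (K - 1)%nat.

Let HM0 N : (0 < M N)%nat.
Proof. pose proof (HM N). lia. Qed.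

Let rho N := INR K * frame_defect (M N) K (steers (M N) (th N)).

Lemma lam_between j : (j < K)%nat -> s2 * sqrt c < lam j <= lam 0%nat.
Proof.
  intros Hj. pose proof (fun j Hj => Rlt_le _ _ (Hdec j Hj)) as Hle.
  pose proof (nonincreasing_le K lam Hle j (K - 1) ltac:(lia) ltac:(lia)).
  pose proof (nonincreasing_le K lam Hle 0 j ltac:(lia) Hj). lra.
Qed.

Lemma Gram_lower_eventually :
  exists N1, forall N, (N1 <= N)%nat -> Gram_lower N K (S N) (lam (K - 1)%nat / 2).
Proof.
  assert (Hl : 0 < lam (K - 1)%nat) by (pose proof (sqrt_lt_R0 c Hc); nra).
  destruct (eventually_forall_lt K (fun k N => lam (K - 1)%nat / 2 < mu k N)) as [N1 HN1].
  { intros k Hk. apply (cv_eventually_gt _ (lam k)); auto.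
    pose proof (nonincreasing_le K lam (fun j Hj => Rlt_le _ _ (Hdec j Hj)) k (K - 1) ltac:(lia) ltac:(lia)).
    lra. }
  exists N1. intros N HN. split; [lra|]. intros w. destruct (Hv N) as [Hon Heig].
  apply (quadform_ge_of_eigs K _ (v N) (fun k => mu k N)); auto.
  - apply Gram_herm.
  - intros k Hk. left. apply HN1; auto.
Qed.

Lemma gram_defect_steers_cv k l : (k < K)%nat -> (l < K)%nat ->
  Un_cv (fun N => gram_defect (M N) (steers (M N) (th N)) k l) 0.
Proof.
  intros Hk Hl. destruct (Nat.eq_dec k l) as [<-|Hne].
  - apply (cv_eventually_ext (fun _ => 0)) with (N0 := 0%nat); [|apply cv_const].
    intros N _. unfold gram_defect, frame_gram, steers, kron.
    rewrite Nat.eqb_refl, cinner_self, sqnorm_steer by apply HM0. unfold Cabs2; simpl; ring.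
  - set (D := 2 - 2 * cos (th0 l - th0 k)).
    assert (HD : 0 < D) by (apply one_sub_cos_pos; intros z; apply Hdist; auto).
    apply (cv_squeeze0 _ (fun N => / INR (M N) * / INR (M N) * (4 / D)) 0).
    + intros N _. split; [apply Cabs2_nonneg|]. unfold gram_defect, frame_gram, steers, kron.
      replace (k =? l)%nat with false by (symmetry; apply Nat.eqb_neq; auto).
      rewrite Cadd_opp0, !Hth. apply Cabs2_cinner_steer_le; auto.
    + replace 0 with (0 * 0 * (4 / D)) by ring. pose proof (cv_inv_M c M Hc HM0 HMc).
      apply CV_mult; [apply CV_mult|]; auto using cv_const.
Qed.

Lemma rho_cv : Un_cv rho 0.
Proof.
  unfold rho. replace 0 with (INR K * 0) by ring. apply cv_scal.
  unfold frame_defect. apply cv_sqrt0. replace 0 with (rsum K (fun _ => rsum K (fun _ => 0))).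
  - apply (cv_rsum K (fun k N => rsum K (fun l => gram_defect (M N) (steers (M N) (th N)) k l))).
    intros k Hk.
    apply (cv_rsum K (fun l N => gram_defect (M N) (steers (M N) (th N)) k l) (fun _ => 0)).
    intros l Hl. apply gram_defect_steers_cv; auto.
  - rewrite rsum_zero; auto. intros. apply rsum_zero; auto.
Qed.

Lemma near_isometric_eventually :
  exists N2, forall N, (N2 <= N)%nat -> near_isometric (M N) K (steers (M N) (th N)) (rho N).
Proof.
  assert (HK1 : 0 < / (INR K + 1)) by (apply Rinv_0_lt_compat; pose proof (pos_INR K); lra).
  destruct (cv_eventually_lt rho 0 _ rho_cv HK1) as [N2 HN2].
  exists N2. intros N HN.
  assert (Hr0 : 0 <= rho N) by (unfold rho; apply Rmult_le_pos; [apply pos_INR | apply sqrt_pos]).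
  assert (HKp : 1 <= INR K) by (replace 1 with (INR 1) by reflexivity; apply le_INR; auto).
  assert (Hr1 : rho N * (INR K + 1) < 1).
  { apply Rmult_lt_reg_r with (/ (INR K + 1)); auto.
    rewrite Rmult_assoc, Rinv_r, Rmult_1_r, Rmult_1_l by lra. auto. }
  split; [auto | split; [nra | split]].
  - rewrite minus_INR by auto. simpl (INR 1). nra.
  - intros c'. apply synthesis_near_isometry.
Qed.

Lemma steer_dvec_cross_cv k l : (k < K)%nat -> (l < K)%nat ->
  Un_cv (fun N => Cabs2 (cinner (M N) (steers (M N) (th N) l) (dvec (M N) N (th N k))))
        (if Nat.eqb l k then c ^ 2 / 4 else 0).
Proof.
  intros Hk Hl. destruct (Nat.eqb_spec l k) as [->|Hne].
  - apply (steer_dvec_cv c M HM0 HMc (fun N => th N k)).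
  - set (D := 2 - 2 * cos (th0 k - th0 l)).
    assert (HD : 0 < D) by (apply one_sub_cos_pos; intros z; apply Hdist; auto).
    apply (cv_squeeze0 _ (fun N => (/ INR N) ^ 2 * (/ INR (M N)) ^ 2 * ((16 / D + 4) / D)
                                   + 2 * (/ INR N) ^ 2 / D) 1).
    + intros N HN. split; [apply Cabs2_nonneg|]. unfold steers. rewrite !Hth.
      apply Cabs2_cinner_steer_dvec_le; auto; lia.
    + replace 0 with (0 ^ 2 * 0 ^ 2 * ((16 / D + 4) / D) + 2 * 0 ^ 2 / D) by (field; lra).
      assert (Hsq : forall w : nat -> R, Un_cv w 0 -> Un_cv (fun N => w N ^ 2) (0 ^ 2)).
      { intros w Hw. simpl. rewrite Rmult_1_r.
        apply (cv_eventually_ext (fun N => w N * w N)) with (N0 := 0%nat); [intros; ring|].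
        apply CV_mult; auto. }
      pose proof (cv_inv_M c M Hc HM0 HMc).
      apply CV_plus.
      * apply CV_mult; [apply CV_mult|apply cv_const]; apply Hsq; auto using cv_inv_INR.
      * unfold Rdiv. apply CV_mult; [|apply cv_const]. apply cv_scal, Hsq, cv_inv_INR.
Qed.

(* Squeeze between the projection bounds [piform_le_steer] and [piform_ge_analysis]: the
   energy of [d1] is c^2/3, its component along [a(theta_k)] carries c^2/4 and the other
   steering components vanish. *)
Lemma piform_dvec_cv k : (k < K)%nat ->
  Un_cv (fun N => piform (M N) K (u N) (dvec (M N) N (th N k))) (c ^ 2 / 12).
Proof.
  intros Hk.
  set (d := fun N => dvec (M N) N (th N k)).
  set (b := fun l N => Cabs2 (cinner (M N) (steers (M N) (th N) l) (d N))).
  destruct Gram_lower_eventually as [N1 HN1]. destruct near_isometric_eventually as [N2 HN2].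
  assert (Hb : Un_cv (fun N => rsum K (fun l => b l N)) (c ^ 2 / 4)).
  { rewrite <- (rsum_if_eqb K k (c ^ 2 / 4) Hk). apply (cv_rsum K b).
    intros l Hl. apply steer_dvec_cross_cv; auto. }
  apply (cv_squeeze (fun N => sqnorm (M N) (d N) - rsum K (fun l => b l N) / (1 - rho N)) _
     (fun N => sqnorm (M N) (d N) - b k N) _ (Nat.max N1 (Nat.max N2 1))).
  - intros N HN. split.
    + apply (piform_ge_analysis (M N) N K (th N) (S N) (u N) (lamN N) (lam (K - 1)%nat / 2));
        auto; [lia | apply HN1 | apply HN2]; lia.
    + apply (piform_le_steer (M N) N K (th N) (S N) (u N) (lamN N) (lam (K - 1)%nat / 2));
        auto; [lia | apply HN1; lia].
  - replace (c ^ 2 / 12) with (c ^ 2 / 3 - c ^ 2 / 4 * / (1 - 0)) by field.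
    apply CV_minus; [apply (sqnorm_dvec_cv c M HM0 HMc)|]. unfold Rdiv. apply CV_mult; auto.
    apply cv_inv; [|lra]. apply CV_minus; auto using cv_const, rho_cv.
  - replace (c ^ 2 / 12) with (c ^ 2 / 3 - c ^ 2 / 4) by field.
    apply CV_minus; [apply (sqnorm_dvec_cv c M HM0 HMc)|].
    pose proof (steer_dvec_cross_cv k k Hk Hk) as Hkk. rewrite Nat.eqb_refl in Hkk. exact Hkk.
Qed.

Lemma fixed_angles_conclusion k : (k < K)%nat ->
  liminf_pos (fun N => piform (M N) K (u N) (dvec (M N) N (th N k))) /\
  liminf_pos (fun N => gammaN (M N) K c s2 lam (u N) (dvec (M N) N (th N k)) (steers (M N) (th N) k)) /\
  Un_cv (fun N => piform (M N) K (u N) (dvec (M N) N (th N k))) (c ^ 2 / 12).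
Proof.
  intros Hk. pose proof (piform_dvec_cv k Hk) as Hq.
  assert (Hq0 : liminf_pos (fun N => piform (M N) K (u N) (dvec (M N) N (th N k))))
    by (apply (liminf_pos_of_cv _ (c ^ 2 / 12)); auto; nra).
  split; [exact Hq0 | split; [|exact Hq]].
  destruct Gram_lower_eventually as [N1 HN1].
  apply (liminf_gamma_of_piform c s2 K M th S u lamN lam (lam 0%nat)); eauto.
  apply lam_between.
Qed.

End FixedAngles.

Section CloseAngles.
Variables (c s2 alpha : R) (M : nat -> nat) (th : nat -> nat -> R)
  (S : nat -> nat -> nat -> Cx) (u : nat -> nat -> nat -> Cx) (lamN : nat -> nat -> R).
Hypothesis Hc : 0 < c.
Hypothesis Hs2 : 0 < s2.
Hypothesis HM : forall N, (2 < M N)%nat.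
Hypothesis HMc : Un_cv (fun N => INR (M N) / INR N) c.
Hypothesis Hu : forall N, spectral_decomp (M N) N 2 (th N) (S N) (u N) (lamN N).
Hypothesis HGc : forall i j, (i < 2)%nat -> (j < 2)%nat ->
  Cconv (fun N => Gram N 2 (S N) i j) (if Nat.eqb i j then C1 else C0).
Hypothesis Hth1 : forall N, (1 <= N)%nat -> th N 1%nat = th N 0%nat + alpha / INR N.
Hypothesis Ha : 0 < alpha.
Hypothesis Hsinc : Rabs (sinc (alpha * c / 2)) < 1 - s2 * sqrt c.

Let HM0 N : (0 < M N)%nat.
Proof. pose proof (HM N). lia. Qed.

Let sig := Rabs (sinc (alpha * c / 2)).

Lemma sig_lt_1 : 0 <= sig < 1.
Proof. pose proof (sqrt_lt_R0 c Hc). split; [apply Rabs_pos | unfold sig; nra]. Qed.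

Lemma Gram_lower_eventually_2 : exists N1, forall N, (N1 <= N)%nat -> Gram_lower N 2 (S N) (1 / 2).
Proof.
  destruct (eventually_forall_lt 2 (fun i N => forall j, (j < 2)%nat ->
      Cabs2 (Cadd (Gram N 2 (S N) i j) (Copp (kron i j))) <= (1 / 4) ^ 2)) as [N1 HN1].
  { intros i Hi.
    apply (eventually_forall_lt 2 (fun j N => Cabs2 (Cadd (Gram N 2 (S N) i j) (Copp (kron i j))) <= (1 / 4) ^ 2)).
    intros j Hj.
    destruct (cv_eventually_lt _ 0 ((1 / 4) ^ 2) (Cabs2_sub_cv0 _ _ (HGc i j Hi Hj)) ltac:(lra)) as [N0 H0].
    exists N0. intros N HN. left. apply H0; auto. }
  exists N1. intros N HN. split; [lra|]. intros w.
  pose proof (cinner_matvec_near_id_const 2 (Gram N 2 (S N)) (1 / 4) w ltac:(lra)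
      (fun i j Hi Hj => HN1 N HN i Hi j Hj)) as Q.
  apply Rabs_le_inv in Q. simpl (INR 2) in Q. pose proof (sqnorm_nonneg 2 w). lra.
Qed.

(* |a(theta_1)^* a(theta_2)|^2, written so that its limit sinc^2(alpha c/2) is read off factorwise. *)
Definition cross_gram_ratio (N : nat) : R :=
  (2 - 2 * cos (INR (M N) / INR N * alpha))
  / ((INR (M N) / INR N) ^ 2 * (INR N ^ 2 * (2 - 2 * cos (alpha / INR N)))).

Lemma cross_gram_ratio_cv : Un_cv cross_gram_ratio (sig ^ 2).
Proof.
  unfold sig. rewrite pow2_abs, sinc_sq by nra.
  replace (2 * (alpha * c / 2)) with (c * alpha) by field.
  replace ((2 - 2 * cos (c * alpha)) / (4 * (alpha * c / 2) ^ 2)) with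
    ((2 - 2 * cos (c * alpha)) * / (c ^ 2 * alpha ^ 2)) by (field; lra).
  assert (Hnum : Un_cv (fun N => 2 - 2 * cos (INR (M N) / INR N * alpha)) (2 - 2 * cos (c * alpha))).
  { apply CV_minus; [apply cv_const|]. apply cv_scal.
    apply (continuity_seq cos (fun N => INR (M N) / INR N * alpha) (c * alpha)); [apply continuity_cos|].
    apply CV_mult; auto; apply cv_const. }
  assert (Hx2 : Un_cv (fun N => (INR (M N) / INR N) ^ 2) (c ^ 2)).
  { apply (cv_eventually_ext (fun N => INR (M N) / INR N * (INR (M N) / INR N))) with (N0 := 0%nat).
    - intros; ring.
    - replace (c ^ 2) with (c * c) by ring. apply CV_mult; auto. }
  pose proof (CV_mult _ _ _ _ Hx2 (sq_one_sub_cos_cv alpha Ha)) as Hden.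
  assert (Hl : c ^ 2 * alpha ^ 2 <> 0) by (assert (0 < c ^ 2 * alpha ^ 2) by (apply Rmult_lt_0_compat; nra); lra).
  exact (CV_mult _ _ _ _ Hnum (cv_inv _ _ Hden Hl)).
Qed.

Lemma Cabs2_steers_gram01 N : (1 <= N)%nat -> alpha / INR N <= PI ->
  Cabs2 (frame_gram (M N) (steers (M N) (th N)) 0%nat 1%nat) = cross_gram_ratio N.
Proof.
  intros HN Hpi. assert (HNp : 0 < INR N) by (apply lt_0_INR; lia).
  assert (HMp : 0 < INR (M N)) by (apply lt_0_INR, HM0).
  assert (HD : cos (alpha / INR N) < 1).
  { pose proof PI_RGT_0. assert (0 < alpha / INR N) by (apply Rdiv_lt_0_compat; lra).
    rewrite <- cos_0. apply cos_decreasing_1; lra. }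
  unfold frame_gram, steers. rewrite cinner_steer by apply HM0.
  rewrite Hth1 by lia.
  replace (th N 0%nat + alpha / INR N - th N 0%nat) with (alpha / INR N) by ring.
  rewrite Cabs2_scale.
  pose proof (Cabs2_expsum (M N) (alpha / INR N)) as E.
  assert (HS : Cabs2 (expsum (M N) (alpha / INR N))
             = (2 - 2 * cos (INR (M N) * (alpha / INR N))) / (2 - 2 * cos (alpha / INR N)))
    by (rewrite <- E; field; lra).
  rewrite HS. unfold cross_gram_ratio.
  replace (INR (M N) / INR N * alpha) with (INR (M N) * (alpha / INR N)) by (field; lra).
  field. repeat split; lra.
Qed.

Lemma near_isometric_eventually_2 :
  exists N2, forall N, (N2 <= N)%nat -> near_isometric (M N) 2 (steers (M N) (th N)) ((sig + 1) / 2).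
Proof.
  pose proof sig_lt_1 as Hsig. set (r := (sig + 1) / 2).
  assert (Hsr : sig ^ 2 < r ^ 2) by (unfold r; nra).
  destruct (cv_eventually_lt _ _ _ cross_gram_ratio_cv Hsr) as [N2 HN2].
  destruct (nat_unbounded (alpha / PI)) as [Npi HNpi].
  assert (HPI := PI_RGT_0).
  exists (Nat.max N2 (Nat.max 1 Npi)). intros N HN.
  assert (HG01 : Cabs2 (frame_gram (M N) (steers (M N) (th N)) 0%nat 1%nat) < r ^ 2).
  { assert (Hpi : alpha / INR N <= PI).
    { assert (0 < INR N) by (apply lt_0_INR; lia).
      assert (INR Npi <= INR N) by (apply le_INR; lia).
      apply (Rmult_le_reg_r (INR N)); auto. unfold Rdiv.
      rewrite Rmult_assoc, Rinv_l, Rmult_1_r by lra.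
      apply (Rmult_lt_compat_r PI) in HNpi; auto. unfold Rdiv in HNpi.
      rewrite Rmult_assoc, Rinv_l, Rmult_1_r in HNpi by lra.
      assert (1 <= INR N) by (replace 1 with (INR 1) by reflexivity; apply le_INR; lia). nra. }
    rewrite (Cabs2_steers_gram01 N ltac:(lia) Hpi). apply HN2; lia. }
  assert (Hself : forall j, frame_gram (M N) (steers (M N) (th N)) j j = C1).
  { intros j. unfold frame_gram, steers. rewrite cinner_self, sqnorm_steer by apply HM0.
    reflexivity. }
  split; [unfold r; lra | split; [unfold r; lra | split; [simpl; unfold r; lra|]]].
  intros c'. rewrite sqnorm_synthesis. apply cinner_matvec_near_id_2; auto; [unfold r; lra | | ].
  - left. exact HG01.
  - unfold frame_gram. rewrite cinner_conj, Cabs2_conj. left. exact HG01.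
Qed.

(* The test vector of [piform_ge_test] with shift h = N / q: h * alpha / N stays between
   alpha / (2q) and alpha / q, so the bound does not degenerate. *)
Lemma piform_ge_kappa k (q N : nat) mG rho : (k < 2)%nat ->
  1 <= INR q -> 8 / c < INR q -> alpha / INR q < PI -> (2 * q <= N)%nat ->
    c / 2 < INR (M N) / INR N ->
  Gram_lower N 2 (S N) mG -> near_isometric (M N) 2 (steers (M N) (th N)) rho ->
  kappa alpha (INR q) <= piform (M N) 2 (u N) (dvec (M N) N (th N k)).
Proof.
  intros Hk Hq1 Hqc Hqa HqN Hx HG Hrho.
  assert (Hq0 : (0 < q)%nat) by (apply INR_lt; simpl; lra).
  assert (HNp : 0 < INR N) by (apply lt_0_INR; lia).
  set (n := M N). set (h := (N / q)%nat). set (L := (n - 2 * h)%nat).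
  destruct (INR_div_bounds N q Hq0) as [Hd1 Hd2]. fold h in Hd1, Hd2.
  assert (Hnc : c / 2 * INR N < INR n).
  { replace (INR n) with (INR n / INR N * INR N) by (field; lra). apply Rmult_lt_compat_r; auto. }
  assert (H8 : 8 < c * INR q).
  { replace 8 with (8 / c * c) by (field; lra). rewrite (Rmult_comm c).
    apply Rmult_lt_compat_r; auto. }
  assert (H4 : 4 * INR h < INR n).
  { assert (4 * INR h * INR q < c / 2 * INR N * INR q) by nra.
    assert (4 * INR h < c / 2 * INR N) by (apply (Rmult_lt_reg_r (INR q)); lra). lra. }
  assert (H4n : (4 * h < n)%nat) by (apply INR_lt; rewrite mult_INR; simpl (INR 4); lra).
  assert (HLr : INR L = INR n - 2 * INR h) by (unfold L; rewrite minus_INR, mult_INR by lia; simpl; ring).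
  assert (Hpi0 : 0 <= piform (M N) 2 (u N) (dvec (M N) N (th N k))).
  { destruct (Hu N) as [Hon _]. rewrite (piform_tail (M N) N 2 (u N) Hon (HM N) ltac:(lia)).
    apply sqnorm_nonneg. }
  set (t := th N k). set (t' := th N (1 - k)%nat).
  assert (Hcos : cos (INR h * t - INR h * t') = cos (INR h * alpha / INR N)).
  { unfold t, t'. destruct k as [|[|k']]; [| | lia]; simpl (1 - _)%nat.
    - rewrite Hth1 by lia.
      replace (INR h * th N 0%nat - INR h * (th N 0%nat + alpha / INR N)) with (- (INR h * alpha / INR N))
        by (field; lra).
      apply cos_neg.
    - rewrite Hth1 by lia. f_equal. field. lra. }
  pose proof (piform_ge_test n N h L t t' _ (HM0 N) ltac:(lia) ltac:(lia) ltac:(unfold L; lia) Hpi0) as TV.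
  assert (H2q : 2 * INR q <= INR N).
  { replace 2 with (INR 2) by reflexivity. rewrite <- mult_INR. apply le_INR. lia. }
  rewrite Hcos in TV.
  eapply Rle_trans; [apply (kappa_le (INR N) (INR n) (INR h) (INR L) alpha (INR q)); auto; try lra|].
  - apply lt_0_INR, HM0.
  - apply TV. intros w Hw1 Hw2.
    apply (piform_ge_orth_steers (M N) N 2 (th N) (S N) (u N) (lamN N) mG rho); auto; [lia|].
    intros k' Hk'. unfold steers.
    destruct k as [|[|k0]]; destruct k' as [|[|k1]]; try lia; unfold t, t' in *; simpl in *; auto.
Qed.

Lemma piform_liminf_2 k : (k < 2)%nat ->
  liminf_pos (fun N => piform (M N) 2 (u N) (dvec (M N) N (th N k))).
Proof.
  intros Hk. assert (HPI := PI_RGT_0).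
  destruct (nat_unbounded (8 / c + alpha / PI + 1)) as [q Hq].
  assert (0 < 8 / c) by (apply Rdiv_lt_0_compat; lra).
  assert (0 < alpha / PI) by (apply Rdiv_lt_0_compat; lra).
  assert (Hqa : alpha / INR q < PI).
  { assert (0 < INR q) by lra. apply (Rmult_lt_reg_r (INR q)); [lra|].
    unfold Rdiv. rewrite Rmult_assoc, Rinv_l, Rmult_1_r by lra.
    assert (Hap : alpha / PI < INR q) by lra. apply (Rmult_lt_compat_r PI) in Hap; auto.
    unfold Rdiv in Hap. rewrite Rmult_assoc, Rinv_l, Rmult_1_r in Hap by lra. lra. }
  destruct Gram_lower_eventually_2 as [N1 HN1]. destruct near_isometric_eventually_2 as [N2 HN2].
  destruct (cv_eventually_gt _ c (c / 2) HMc ltac:(lra)) as [N3 HN3].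
  exists (kappa alpha (INR q)). split; [apply kappa_pos; auto; lra|].
  exists (Nat.max N1 (Nat.max N2 (Nat.max N3 (2 * q)))). intros N HN.
  specialize (HN1 N ltac:(lia)). specialize (HN2 N ltac:(lia)). specialize (HN3 N ltac:(lia)).
  apply (piform_ge_kappa k q N (1 / 2) ((sig + 1) / 2)); auto; try lra; lia.
Qed.

Lemma close_angles_conclusion k : (k < 2)%nat ->
  liminf_pos (fun N => piform (M N) 2 (u N) (dvec (M N) N (th N k))) /\
  liminf_pos (fun N => gammaN (M N) 2 c s2 (lamA3 c alpha) (u N) (dvec (M N) N (th N k))
                         (steers (M N) (th N) k)).
Proof.
  intros Hk. pose proof (piform_liminf_2 k Hk) as Hq. split; [exact Hq|].
  destruct Gram_lower_eventually_2 as [N1 HN1].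
  apply (liminf_gamma_of_piform c s2 2 M th S u lamN (lamA3 c alpha) 2); eauto.
  intros j Hj. pose proof sig_lt_1. unfold lamA3, sig in *. destruct j as [|[|j]]; simpl; lra.
Qed.

End CloseAngles.

Theorem mainTheorem10
  (c s2 : R) (K : nat) (M : nat -> nat)
  (th : nat -> nat -> R) (S : nat -> nat -> nat -> Cx)
  (u : nat -> nat -> nat -> Cx) (lamN : nat -> nat -> R)
  (Hc : 0 < c) (Hs2 : 0 < s2) (HK : (1 <= K)%nat)
  (HM : forall N, (K < M N)%nat)
  (HMc : Un_cv (fun N => INR (M N) / INR N) c)
  (Hu : forall N,
     orthonormal (M N) (M N) (u N) /\
     (forall j, (j < M N)%nat ->
        is_eigvec (M N) (BBs (M N) N K (th N) (S N)) (lamN N j) (u N j)) /\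
     (forall j, (j + 1 < K)%nat -> lamN N (j + 1)%nat <= lamN N j) /\
     (forall j, (K <= j)%nat -> (j < M N)%nat -> lamN N j = 0)) :
  let d1 N k := fun i => Cscale (/ INR N) (steer' (M N) (th N k) i) in
  let d2 N k := steer (M N) (th N k) in
  let q1 k N := Re (qform (M N) (PiMat K (u N)) (d1 N k) (d1 N k)) in
  let gam lam k N := gammaN (M N) K c s2 lam (u N) (d1 N k) (d2 N k) in
  (forall lam, A2 c s2 K th S lam ->
     forall k, (k < K)%nat ->
       liminf_pos (q1 k) /\ liminf_pos (gam lam k) /\ Un_cv (q1 k) (c ^ 2 / 12)) /\
  (forall alpha, A3 c s2 K th S alpha ->
     forall k, (k < K)%nat ->
       liminf_pos (q1 k) /\ liminf_pos (gam (lamA3 c alpha) k)).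
Proof.
  intros d1 d2 q1 gam. split.
  - intros lam [[th0 [Hth Hdist]] [[mu [v [Hv Hmu]]] [Hdec Hlast]]] k Hk.
    exact (fixed_angles_conclusion c s2 K M th S u lamN th0 mu v lam
             Hc Hs2 HK HM HMc Hu Hth Hdist Hv Hmu Hdec Hlast k Hk).
  - intros alpha [HK2 [HGc [Hth1 [Ha Hsinc]]]] k Hk. subst K.
    exact (close_angles_conclusion c s2 alpha M th S u lamN
             Hc Hs2 HM HMc Hu HGc Hth1 Ha Hsinc k Hk).
Qed.
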